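(* Let $A=\bigoplus_{i\in\mathbb{Z}}A_i$ be a pre-CP ring, and let $\psi:A_{-1}\otimes_{A_0}A_1\to A_0$ be given by $\psi(a\otimes b)=ab$. Then $(A_{-1},A_1,\psi)$ is an s-unital $A_0$-system satisfying Condition (FS), its Cuntz–Pimsner ring $\mathcal{O}_{(A_{-1},A_1,\psi)}$ is well-defined, the tuple $(i_{A_{-1}},i_{A_1},i_{A_0},A)$ of inclusion maps is a surjective covariant representation, and $$(i_{A_{-1}},i_{A_1},i_{A_0},A)\cong_r(\iota^{CP}_{A_{-1}},\iota^{CP}_{A_1},\iota^{CP}_{A_0},\mathcal{O}_{(A_{-1},A_1,\psi)}).$$ In particular $A\cong_{\mathrm{gr}}\mathcal{O}_{(A_{-1},A_1,\psi)}$, and this covariant representation is semi-full.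
   Context: Rings are associative, not necessarily unital. For additive subsets $X,Y$ of a ring, $XY$ is the additive subgroup generated by products, and $X^n$ similarly. A bimodule ${}_AM_B$ is s-unital if for each $x\in M$ there are $a\in A,b\in B$ with $ax=x=xb$; a ring is s-unital if it is s-unital as a bimodule over itself. A $\mathbb{Z}$-graded ring $A$ is nearly epsilon-strongly graded if each $A_i$ is an s-unital $A_iA_{-i}$-$A_{-i}A_i$-bimodule; semi-saturated if $A_n=(A_1)^n$, $A_{-n}=(A_{-1})^n$ for $n>0$. $\mathrm{Ann}_{A_0}(A_1)=\{r\in A_0:rA_1=0\}$ and for an ideal $J$ of $A_0$, $J^\perp=\{r\in A_0:rx=xr=0\ \forall x\in J\}$. $A$ is pre-CP if it is semi-saturated, nearly epsilon-strongly graded and $\mathrm{Ann}_{A_0}(A_1)\cap\mathrm{Ann}_{A_0}(A_1)^\perp=\{0\}$. An $R$-system is a triple $(P,Q,\psi)$ with $P,Q$ $R$-bimodules and $\psi:P\otimes_RQ\to R$ an $R$-bimodule homomorphism; it is s-unital if $R$ is s-unital and $P,Q$ are s-unital $R$-$R$-bimodules. Put $P^{\otimes0}=Q^{\otimes0}=R$, $\psi_0(r\otimes r')=rr'$, $\psi_1=\psi$, $Q^{\otimes n}=Q^{\otimes(n-1)}\otimes_RQ$, $P^{\otimes n}=P\otimes_RP^{\otimes(n-1)}$, $\psi_n((p_1\otimes p_2)\otimes(q_2\otimes q_1))=\psi(p_1\psi_{n-1}(p_2\otimes q_2)\otimes q_1)$. A covariant representation is a tuple $(S,T,\sigma,B)$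 with $B$ a ring, $S:P\to B$, $T:Q\to B$ additive, $\sigma:R\to B$ a ring homomorphism, with $S(pr)=S(p)\sigma(r)$, $S(rp)=\sigma(r)S(p)$, $T(qr)=T(q)\sigma(r)$, $T(rq)=\sigma(r)T(q)$, $\sigma(\psi(p\otimes q))=S(p)T(q)$. It is surjective if $B$ is generated as a ring by $\sigma(R)\cup S(P)\cup T(Q)$, graded if moreover $B$ is $\mathbb{Z}$-graded with $\sigma(R)\subseteq B_0$, $T(Q)\subseteq B_1$, $S(P)\subseteq B_{-1}$. For graded ones, $I^{(k)}_{\psi,\sigma}$ is the ideal of $B_0$ generated by $\{\sigma(\psi_k(p\otimes q)):p\in P^{\otimes k},q\in Q^{\otimes k}\}$, and the representation is semi-full if $B_{-k}B_k=I^{(k)}_{\psi,\sigma}$ for all $k\ge0$. A morphism $(S,T,\sigma,B)\to(S',T',\sigma',B')$ is a ring homomorphism $\phi:B\to B'$ with $\phi S=S'$, $\phi T=T'$, $\phi\sigma=\sigma'$; $\cong_r$ is isomorphism in this category. $\theta_{q,p}(x)=q\psi(p\otimes x)$ on $Q$, $\theta_{p,q}(y)=\psi(y\otimes q)p$ on $P$; $\mathcal{F}_P(Q)$, $\mathcal{F}_Q(P)$ are the additive groups they generate. Condition (FS): for all finite sets $\{q_i\}\subseteq Q$, $\{p_j\}\subseteq P$ there are $\Theta\in\mathcal{F}_P(Q)$, $\Phi\in\mathcal{F}_Q(P)$ fixing each $q_i$, resp. $p_j$. $\Delta(r)(q)=rq$. Under (FS), each covariant representation gives a unique ring homomorphism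 $\pi_{T,S}:\mathcal{F}_P(Q)\to B$ with $\theta_{q,p}\mapsto T(q)S(p)$. The Toeplitz representation $(\iota_P,\iota_Q,\iota_R,\mathcal{T}_{(P,Q,\psi)})$ is the universal covariant representation, graded with $\mathcal{T}_i$ generated additively by $\iota_Q^m(q)\iota_P^n(p)$ and $\iota_R(r)\iota_Q^m(q)\iota_P^n(p)$, $q\in Q^{\otimes m},p\in P^{\otimes n}$, $m-n=i$. An ideal $J\subseteq R$ is $\psi$-compatible if $\Delta(J)\subseteq\mathcal{F}_P(Q)$ and faithful if $J\cap\ker\Delta=0$; $\mathcal{T}(J)$ is the ideal generated by $\iota_R(x)-\pi_{\iota_Q,\iota_P}(\Delta(x))$, $x\in J$, and $\mathcal{O}(J)=\mathcal{T}/\mathcal{T}(J)$ with quotient map $\rho$, quotient grading, and representation $(\rho\iota_P,\rho\iota_Q,\rho\iota_R,\mathcal{O}(J))$. If a unique maximal $\psi$-compatible faithful ideal $J$ exists, the Cuntz–Pimsner ring $\mathcal{O}_{(P,Q,\psi)}=\mathcal{O}(J)$ is well-defined, with Cuntz–Pimsner representation $(\iota^{CP}_P,\iota^{CP}_Q,\iota^{CP}_R,\mathcal{O}_{(P,Q,\psi)})$ the corresponding relative representation. *)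

From Stdlib Require Import ZArith List.
Import ListNotations.
Open Scope Z_scope.

Record nuring := NURing {
  car :> Type;
  rzero : car;
  radd : car -> car -> car;
  ropp : car -> car;
  rmul : car -> car -> car;
  raddA : forall x y z, radd x (radd y z) = radd (radd x y) z;
  raddC : forall x y, radd x y = radd y x;
  radd0r : forall x, radd rzero x = x;
  raddNr : forall x, radd (ropp x) x = rzero;
  rmulA : forall x y z, rmul x (rmul y z) = rmul (rmul x y) z;
  rmulDl : forall x y z, rmul (radd x y) z = radd (rmul x z) (rmul y z);
  rmulDr : forall x y z, rmul x (radd y z) = radd (rmul x y) (rmul x z)
}.
Arguments rzero {_}.
Arguments radd {_} _ _.
Arguments ropp {_} _.
Arguments rmul {_} _ _.

Definition rsum {R : nuring} (l : list R) : R := fold_right radd rzero l.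

(* product x1 * ... * xm of a nonempty list (0 for the empty list, never used) *)
Fixpoint rprodne {R : nuring} (l : list R) : R :=
  match l with
  | [] => rzero
  | [x] => x
  | x :: l' => rmul x (rprodne l')
  end.

Definition is_addsubgroup {R : nuring} (S : R -> Prop) : Prop :=
  S rzero /\ (forall x y, S x -> S y -> S (radd x y)) /\ (forall x, S x -> S (ropp x)).

Inductive addgen {R : nuring} (S : R -> Prop) : R -> Prop :=
| ag_in x : S x -> addgen S x
| ag_0 : addgen S rzero
| ag_add x y : addgen S x -> addgen S y -> addgen S (radd x y)
| ag_opp x : addgen S x -> addgen S (ropp x).

Inductive ringgen {R : nuring} (S : R -> Prop) : R -> Prop :=
| rg_in x : S x -> ringgen S x
| rg_0 : ringgen S rzero
| rg_add x y : ringgen S x -> ringgen S y -> ringgen S (radd x y)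
| rg_opp x : ringgen S x -> ringgen S (ropp x)
| rg_mul x y : ringgen S x -> ringgen S y -> ringgen S (rmul x y).

(* two-sided ideal of the subring Sub generated by S (S is assumed inside Sub) *)
Inductive idealgen {R : nuring} (Sub S : R -> Prop) : R -> Prop :=
| ig_in x : S x -> idealgen Sub S x
| ig_0 : idealgen Sub S rzero
| ig_add x y : idealgen Sub S x -> idealgen Sub S y -> idealgen Sub S (radd x y)
| ig_opp x : idealgen Sub S x -> idealgen Sub S (ropp x)
| ig_mull b x : Sub b -> idealgen Sub S x -> idealgen Sub S (rmul b x)
| ig_mulr b x : Sub b -> idealgen Sub S x -> idealgen Sub S (rmul x b).

Definition prodset {R : nuring} (X Y : R -> Prop) : R -> Prop :=
  addgen (fun a => exists x y, X x /\ Y y /\ a = rmul x y).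

Fixpoint pws {R : nuring} (X : R -> Prop) (n : nat) : R -> Prop :=
  match n with
  | O | S O => addgen X
  | S m => prodset (pws X m) X
  end.

Definition ringhom {R S : nuring} (f : R -> S) : Prop :=
  forall x y, f (radd x y) = radd (f x) (f y) /\ f (rmul x y) = rmul (f x) (f y).

Definition is_graded (A : nuring) (G : Z -> A -> Prop) : Prop :=
  (forall i, is_addsubgroup (G i)) /\
  (forall i j x y, G i x -> G j y -> G (i + j) (rmul x y)) /\
  (forall a, exists l : list (Z * A),
      NoDup (map fst l) /\ (forall p, In p l -> G (fst p) (snd p)) /\
      a = rsum (map snd l)) /\
  (forall l : list (Z * A),
      NoDup (map fst l) -> (forall p, In p l -> G (fst p) (snd p)) ->
      rsum (map snd l) = rzero -> forall p, In p l -> snd p = rzero).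

Definition s_unital_bimod {A : nuring} (L M Rt : A -> Prop) : Prop :=
  forall x, M x -> exists a b, L a /\ Rt b /\ rmul a x = x /\ rmul x b = x.

Definition nearly_eps_strong (A : nuring) (G : Z -> A -> Prop) : Prop :=
  forall i, s_unital_bimod (prodset (G i) (G (- i))) (G i) (prodset (G (- i)) (G i)).

Definition semi_saturated (A : nuring) (G : Z -> A -> Prop) : Prop :=
  forall n : nat, (0 < n)%nat -> forall x,
    (G (Z.of_nat n) x <-> pws (G 1) n x) /\ (G (- Z.of_nat n) x <-> pws (G (-1)) n x).

Definition annA1 {A : nuring} (G : Z -> A -> Prop) (r : A) : Prop :=
  G 0 r /\ forall x, G 1 x -> rmul r x = rzero.

Definition perp {A : nuring} (G : Z -> A -> Prop) (J : A -> Prop) (r : A) : Prop :=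
  G 0 r /\ forall x, J x -> rmul r x = rzero /\ rmul x r = rzero.

Definition pre_CP (A : nuring) (G : Z -> A -> Prop) : Prop :=
  is_graded A G /\ semi_saturated A G /\ nearly_eps_strong A G /\
  (forall r, annA1 G r -> perp G (annA1 G) r -> r = rzero).

(* ---------- R-systems (P,Q,psi) with R,P,Q inside a ring A ----------
   R is a subring of A; P,Q are R-bimodules whose actions are multiplication
   in A; psi p q denotes psi(p (x) q) on elementary tensors. *)
Definition is_subring {A : nuring} (R : A -> Prop) : Prop :=
  is_addsubgroup R /\ forall x y, R x -> R y -> R (rmul x y).

Definition is_bimodule {A : nuring} (R M : A -> Prop) : Prop :=
  is_addsubgroup M /\ forall r m, R r -> M m -> M (rmul r m) /\ M (rmul m r).

(* psi : P x Q -> R is biadditive and R-balanced (hence defines a map on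
   P (x)_R Q) and the induced map is an R-bimodule homomorphism. *)
Definition is_system {A : nuring} (R P Q : A -> Prop) (psi : A -> A -> A) : Prop :=
  is_subring R /\ is_bimodule R P /\ is_bimodule R Q /\
  (forall p q, P p -> Q q -> R (psi p q)) /\
  (forall p p' q, P p -> P p' -> Q q -> psi (radd p p') q = radd (psi p q) (psi p' q)) /\
  (forall p q q', P p -> Q q -> Q q' -> psi p (radd q q') = radd (psi p q) (psi p q')) /\
  (forall p r q, P p -> R r -> Q q -> psi (rmul p r) q = psi p (rmul r q)) /\
  (forall r p q, R r -> P p -> Q q -> psi (rmul r p) q = rmul r (psi p q)) /\
  (forall p q r, P p -> Q q -> R r -> psi p (rmul q r) = rmul (psi p q) r).

Definition s_unital_system {A : nuring} (R P Q : A -> Prop) : Prop :=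
  s_unital_bimod R R R /\ s_unital_bimod R P R /\ s_unital_bimod R Q R.

(* an element sum_k theta_{q_k,p_k} of F_P(Q), given by the list of (q_k,p_k) *)
Definition thetaQ {A : nuring} (psi : A -> A -> A) (l : list (A * A)) (x : A) : A :=
  rsum (map (fun t => rmul (fst t) (psi (snd t) x)) l).
(* an element sum_k theta_{p_k,q_k} of F_Q(P), given by the list of (p_k,q_k) *)
Definition thetaP {A : nuring} (psi : A -> A -> A) (l : list (A * A)) (y : A) : A :=
  rsum (map (fun t => rmul (psi y (snd t)) (fst t)) l).

Definition cond_FS {A : nuring} (P Q : A -> Prop) (psi : A -> A -> A) : Prop :=
  forall (qs ps : list A), Forall Q qs -> Forall P ps ->
  exists (Th Ph : list (A * A)),
    (forall t, In t Th -> Q (fst t) /\ P (snd t)) /\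
    (forall t, In t Ph -> P (fst t) /\ Q (snd t)) /\
    (forall q, In q qs -> thetaQ psi Th q = q) /\
    (forall p, In p ps -> thetaP psi Ph p = p).

(* psi_n on an elementary tensor (p1 (x) ... (x) pn) (x) (x1 (x) ... (x) xn),
   n >= 1; the argument qs is the reversed list [xn; ...; x1] so that
   psi_n((p1(x)p')(x)(q'(x)q1)) = psi(p1 psi_{n-1}(p'(x)q') (x) q1) with q1 = xn. *)
Fixpoint psiE_rev {A : nuring} (psi : A -> A -> A) (ps qs : list A) : A :=
  match ps, qs with
  | [p], [q] => psi p q
  | p :: ps', q :: qs' => psi (rmul p (psiE_rev psi ps' qs')) q
  | _, _ => rzero
  end.
Definition psiE {A : nuring} (psi : A -> A -> A) (ps xs : list A) : A :=
  psiE_rev psi ps (rev xs).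

Record rep (A : nuring) := Rep {
  rB : nuring;
  rS : A -> rB;
  rT : A -> rB;
  rsig : A -> rB
}.
Arguments rB {_} _.
Arguments rS {_} _ _.
Arguments rT {_} _ _.
Arguments rsig {_} _ _.

Definition is_covrep {A : nuring} (R P Q : A -> Prop) (psi : A -> A -> A)
  (c : rep A) : Prop :=
  (forall x y, R x -> R y ->
     rsig c (radd x y) = radd (rsig c x) (rsig c y) /\
     rsig c (rmul x y) = rmul (rsig c x) (rsig c y)) /\
  (forall p p', P p -> P p' -> rS c (radd p p') = radd (rS c p) (rS c p')) /\
  (forall q q', Q q -> Q q' -> rT c (radd q q') = radd (rT c q) (rT c q')) /\
  (forall p r, P p -> R r ->
     rS c (rmul p r) = rmul (rS c p) (rsig c r) /\
     rS c (rmul r p) = rmul (rsig c r) (rS c p)) /\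
  (forall q r, Q q -> R r ->
     rT c (rmul q r) = rmul (rT c q) (rsig c r) /\
     rT c (rmul r q) = rmul (rsig c r) (rT c q)) /\
  (forall p q, P p -> Q q -> rsig c (psi p q) = rmul (rS c p) (rT c q)).

Definition rep_surjective {A : nuring} (R P Q : A -> Prop) (c : rep A) : Prop :=
  forall b : rB c, ringgen (fun b' => exists a,
      (R a /\ b' = rsig c a) \/ (P a /\ b' = rS c a) \/ (Q a /\ b' = rT c a)) b.

Definition rep_graded {A : nuring} (R P Q : A -> Prop) (c : rep A)
  (GB : Z -> rB c -> Prop) : Prop :=
  rep_surjective R P Q c /\ is_graded (rB c) GB /\
  (forall r, R r -> GB 0 (rsig c r)) /\
  (forall q, Q q -> GB 1 (rT c q)) /\
  (forall p, P p -> GB (-1) (rS c p)).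

(* generators of I^(k)_{psi,sigma} (elementary tensors suffice, since the
   ideal is closed under sums and sigma o psi_k is additive) *)
Definition gensI {A : nuring} (R P Q : A -> Prop) (psi : A -> A -> A)
  (c : rep A) (k : nat) (b : rB c) : Prop :=
  (k = 0%nat /\ exists r r', R r /\ R r' /\ b = rsig c (rmul r r')) \/
  ((0 < k)%nat /\ exists ps xs, length ps = k /\ length xs = k /\
     Forall P ps /\ Forall Q xs /\ b = rsig c (psiE psi ps xs)).

Definition semi_full {A : nuring} (R P Q : A -> Prop) (psi : A -> A -> A)
  (c : rep A) (GB : Z -> rB c -> Prop) : Prop :=
  forall (k : nat) (b : rB c),
    prodset (GB (- Z.of_nat k)) (GB (Z.of_nat k)) b <->
    idealgen (GB 0) (gensI R P Q psi c k) b.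

Definition rep_morphism {A : nuring} (R P Q : A -> Prop) (c d : rep A)
  (f : rB c -> rB d) : Prop :=
  ringhom f /\
  (forall p, P p -> f (rS c p) = rS d p) /\
  (forall q, Q q -> f (rT c q) = rT d q) /\
  (forall r, R r -> f (rsig c r) = rsig d r).

Definition rep_iso {A : nuring} (R P Q : A -> Prop) (c d : rep A) : Prop :=
  exists (f : rB c -> rB d) (g : rB d -> rB c),
    rep_morphism R P Q c d f /\ rep_morphism R P Q d c g /\
    (forall x, g (f x) = x) /\ (forall y, f (g y) = y).

Definition is_toeplitz {A : nuring} (R P Q : A -> Prop) (psi : A -> A -> A)
  (t : rep A) : Prop :=
  is_covrep R P Q psi t /\
  forall d : rep A, is_covrep R P Q psi d ->
    (exists f, rep_morphism R P Q t d f) /\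
    (forall f g, rep_morphism R P Q t d f -> rep_morphism R P Q t d g ->
                 forall x, f x = g x).

(* the grading of the Toeplitz ring: T_i is generated additively by
   iota_Q^m(q) iota_P^n(p) and iota_R(r) iota_Q^m(q) iota_P^n(p),
   q in Q^{(x)m}, p in P^{(x)n}, m - n = i (elementary tensors;
   iota_Q^0 = iota_P^0 = iota_R on Q^{(x)0} = P^{(x)0} = R). *)
Definition toep_Qpart {A : nuring} (R Q : A -> Prop) (t : rep A) (m : nat)
  (u : rB t) : Prop :=
  (m = 0%nat /\ exists r, R r /\ u = rsig t r) \/
  ((0 < m)%nat /\ exists xs, length xs = m /\ Forall Q xs /\
     u = rprodne (map (rT t) xs)).
Definition toep_Ppart {A : nuring} (R P : A -> Prop) (t : rep A) (n : nat)
  (v : rB t) : Prop :=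
  (n = 0%nat /\ exists r, R r /\ v = rsig t r) \/
  ((0 < n)%nat /\ exists ps, length ps = n /\ Forall P ps /\
     v = rprodne (map (rS t) ps)).
Definition toep_grading {A : nuring} (R P Q : A -> Prop) (t : rep A)
  (i : Z) : rB t -> Prop :=
  addgen (fun b => exists (m n : nat) u v,
     Z.of_nat m - Z.of_nat n = i /\ toep_Qpart R Q t m u /\ toep_Ppart R P t n v /\
     (b = rmul u v \/ exists r, R r /\ b = rmul (rsig t r) (rmul u v))).

Definition is_ideal_of {A : nuring} (R J : A -> Prop) : Prop :=
  (forall x, J x -> R x) /\ is_addsubgroup J /\
  (forall r x, R r -> J x -> J (rmul r x) /\ J (rmul x r)).

(* Delta(x) = sum_k theta_{q_k,p_k} in F_P(Q) *)
Definition Delta_repr {A : nuring} (P Q : A -> Prop) (psi : A -> A -> A)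
  (x : A) (l : list (A * A)) : Prop :=
  (forall t, In t l -> Q (fst t) /\ P (snd t)) /\
  (forall q, Q q -> rmul x q = thetaQ psi l q).

Definition psi_compatible {A : nuring} (P Q : A -> Prop) (psi : A -> A -> A)
  (J : A -> Prop) : Prop :=
  forall x, J x -> exists l, Delta_repr P Q psi x l.

Definition faithful_ideal {A : nuring} (Q : A -> Prop) (J : A -> Prop) : Prop :=
  forall x, J x -> (forall q, Q q -> rmul x q = rzero) -> x = rzero.

Definition good_ideal {A : nuring} (R P Q : A -> Prop) (psi : A -> A -> A)
  (J : A -> Prop) : Prop :=
  is_ideal_of R J /\ psi_compatible P Q psi J /\ faithful_ideal Q J.

Definition maximal_good_ideal {A : nuring} (R P Q : A -> Prop) (psi : A -> A -> A)
  (J : A -> Prop) : Prop :=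
  good_ideal R P Q psi J /\
  forall J', good_ideal R P Q psi J' -> (forall x, J x -> J' x) ->
             forall x, J' x -> J x.

Definition unique_maximal_good_ideal {A : nuring} (R P Q : A -> Prop)
  (psi : A -> A -> A) (J : A -> Prop) : Prop :=
  maximal_good_ideal R P Q psi J /\
  forall J', maximal_good_ideal R P Q psi J' -> forall x, J' x <-> J x.

(* T(J): the ideal of the Toeplitz ring generated by
   iota_R(x) - pi(Delta(x)), x in J *)
Definition TJ {A : nuring} (P Q : A -> Prop) (psi : A -> A -> A)
  (J : A -> Prop) (t : rep A) : rB t -> Prop :=
  idealgen (fun _ => True) (fun b => exists x l,
     J x /\ Delta_repr P Q psi x l /\
     b = radd (rsig t x)
              (ropp (rsum (map (fun u => rmul (rT t (fst u)) (rS t (snd u))) l)))).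

(* the relative representation on a quotient rho : T -> B' of T by an ideal *)
Definition quot_rep {A : nuring} (t : rep A) (B' : nuring) (rho : rB t -> B') : rep A :=
  Rep A B' (fun p => rho (rS t p)) (fun q => rho (rT t q)) (fun r => rho (rsig t r)).

Definition incl_rep (A : nuring) : rep A :=
  Rep A A (fun x => x) (fun x => x) (fun x => x).

Definition graded_iso (A B : nuring) (GA : Z -> A -> Prop) (GB : Z -> B -> Prop) : Prop :=
  exists (f : A -> B) (g : B -> A),
    ringhom f /\ ringhom g /\ (forall x, g (f x) = x) /\ (forall y, f (g y) = y) /\
    (forall i a, GA i a <-> GB i (f a)).

(* Nearly epsilon-strongness gives local units: finitely many
      elements of A_i have a common left unit in A_i A_{-i} (and a right one in
      A_{-i} A_i); semi-saturation A_{+-n} = (A_{+-1})^n shows that A is generated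
      by A_0, A_1 and A_{-1}.
   2. The ideal J.  The set of r in Ann(A_1)^perp whose left action Delta(r) on
      A_1 lies in F_P(Q) is a psi-compatible faithful ideal containing every
      other one: faithfulness forces an ideal into Ann(A_1)^perp, and
      Ann(A_1) cap Ann(A_1)^perp = 0 gives faithfulness of J.  Every q p with
      q in A_1, p in A_{-1} lies in J with Delta(q p) = theta_{q,p}.
   3. The system is s-unital and satisfies (FS) by the local units, and the
      inclusion maps form a surjective, graded, semi-full covariant
      representation.
   4. A Toeplitz ring T is generated by the images of A_0, A_1, A_{-1}.
   5. The isomorphism.  Let rho : T -> O be the quotient by T(J) and f : T -> A
      the morphism given by universality.  Since f kills T(J), it factors as
      g o rho, and g is onto by 1.  For injectivity: in O, T(q) S(p) = sigma(q p),
      so every element of O is a sum of words sigma(r), T(q1)..T(qn) or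
      S(p1)..S(pn); by directness of the grading it suffices to treat words of
      one degree, which is done by induction on the length, killing such a sum
      through a common local unit e = sum q_i p_i of its first letters.  *)
From Stdlib Require Import ZArith List Lia.
From Stdlib Require Import ClassicalEpsilon ProofIrrelevance.
Import ListNotations.
Open Scope Z_scope.

Section NonUnitalRing.
Context {R : nuring}.

Lemma radd0 (x : R) : radd x rzero = x.
Proof. rewrite raddC. apply radd0r. Qed.

Lemma raddN (x : R) : radd x (ropp x) = rzero.
Proof. rewrite raddC. apply raddNr. Qed.

Lemma radd_cancel_l (a b c : R) : radd a b = radd a c -> b = c.
Proof.
  intro E. rewrite <- (radd0r _ b), <- (radd0r _ c), <- (raddNr _ a), <- !raddA, E.
  reflexivity.
Qed.

Lemma radd_eq0_opp (a b : R) : radd a b = rzero -> b = ropp a.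
Proof. intro E. apply (radd_cancel_l a). rewrite E, raddN. reflexivity. Qed.

Lemma rsub_eq0 (a b : R) : radd a (ropp b) = rzero -> a = b.
Proof.
  intro E. apply (radd_cancel_l (ropp b)). rewrite raddC, E, raddNr. reflexivity.
Qed.

Lemma rmul0r (x : R) : rmul rzero x = rzero.
Proof.
  apply (radd_cancel_l (rmul rzero x)). rewrite <- rmulDl, radd0r, radd0. reflexivity.
Qed.

Lemma rmulr0 (x : R) : rmul x rzero = rzero.
Proof.
  apply (radd_cancel_l (rmul x rzero)). rewrite <- rmulDr, radd0r, radd0. reflexivity.
Qed.

Lemma ropp_mul_l (x y : R) : rmul (ropp x) y = ropp (rmul x y).
Proof. apply radd_eq0_opp. rewrite <- rmulDl, raddN, rmul0r. reflexivity. Qed.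

Lemma ropp_mul_r (x y : R) : rmul x (ropp y) = ropp (rmul x y).
Proof. apply radd_eq0_opp. rewrite <- rmulDr, raddN, rmulr0. reflexivity. Qed.

Lemma ropp0 : ropp (@rzero R) = rzero.
Proof. symmetry. apply radd_eq0_opp, radd0. Qed.

Lemma ropp_add (x y : R) : ropp (radd x y) = radd (ropp x) (ropp y).
Proof.
  symmetry. apply radd_eq0_opp.
  rewrite (raddC _ (ropp x)), raddA, <- (raddA _ x y), raddN, radd0, raddN. reflexivity.
Qed.

Lemma rsum_cons (x : R) (l : list R) : rsum (x :: l) = radd x (rsum l).
Proof. reflexivity. Qed.

Lemma rsum_app (l1 l2 : list R) : rsum (l1 ++ l2) = radd (rsum l1) (rsum l2).
Proof.
  induction l1 as [|x l1 IH]; cbn. - symmetry. apply radd0r.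
  - unfold rsum in IH. rewrite IH, raddA. reflexivity.
Qed.

Lemma rsum_mul_l (x : R) (l : list R) : rmul x (rsum l) = rsum (map (rmul x) l).
Proof. induction l; cbn. - apply rmulr0. - rewrite rmulDr. f_equal. exact IHl. Qed.

Lemma rsum_mul_r (x : R) (l : list R) :
  rmul (rsum l) x = rsum (map (fun y => rmul y x) l).
Proof. induction l; cbn. - apply rmul0r. - rewrite rmulDl. f_equal. exact IHl. Qed.

Lemma rsum_map_add {T} (f g : T -> R) (l : list T) :
  rsum (map (fun x => radd (f x) (g x)) l) = radd (rsum (map f l)) (rsum (map g l)).
Proof.
  induction l as [|x l IH]; cbn. - symmetry. apply radd0r.
  - unfold rsum in IH. rewrite IH, <- !raddA. f_equal. rewrite !raddA. f_equal. apply raddC.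
Qed.

Lemma rsum_map_opp {T} (f : T -> R) (l : list T) :
  rsum (map (fun x => ropp (f x)) l) = ropp (rsum (map f l)).
Proof.
  induction l as [|x l IH]; cbn. - symmetry. apply ropp0.
  - unfold rsum in IH. rewrite IH, ropp_add. reflexivity.
Qed.

Lemma rsum_map_ext {T} (f g : T -> R) (l : list T) :
  (forall x, In x l -> f x = g x) -> rsum (map f l) = rsum (map g l).
Proof. intro H. f_equal. apply map_ext_in, H. Qed.

Lemma rsum_map_zero {T} (f : T -> R) (l : list T) :
  (forall x, In x l -> f x = rzero) -> rsum (map f l) = rzero.
Proof.
  induction l as [|x l IH]; intro H; cbn. - reflexivity.
  - unfold rsum in IH. rewrite H, IH, radd0r; [reflexivity | intros; apply H; cbn; auto | cbn; auto].
Qed.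

Lemma subgroup_rsum (S : R -> Prop) (l : list R) :
  is_addsubgroup S -> (forall x, In x l -> S x) -> S (rsum l).
Proof.
  intros (H0 & Hadd & _) H. induction l as [|x l IH]; cbn. - exact H0.
  - apply Hadd. + apply H; left; auto. + apply IH. intros; apply H; right; auto.
Qed.

End NonUnitalRing.

(* The opposite ring, used to obtain right-handed statements from left-handed ones. *)
Definition opposite_ring (R : nuring) : nuring.
Proof.
  refine (NURing R rzero radd ropp (fun x y => rmul y x) _ _ _ _ _ _ _); intros.
  - apply raddA. - apply raddC. - apply radd0r. - apply raddNr.
  - symmetry. apply rmulA. - apply rmulDr. - apply rmulDl.
Defined.

Section AdditiveMaps.
Context {R S : nuring} (f : R -> S) (D : R -> Prop) (HD : is_addsubgroup D).
Hypothesis f_add : forall x y, D x -> D y -> f (radd x y) = radd (f x) (f y).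

Lemma addmap_0 : f rzero = rzero.
Proof.
  apply (radd_cancel_l (f rzero)). rewrite <- f_add by apply HD. rewrite !radd0. reflexivity.
Qed.

Lemma addmap_opp x : D x -> f (ropp x) = ropp (f x).
Proof.
  intro Hx. apply radd_eq0_opp. rewrite <- f_add, raddN by (auto; apply HD; auto).
  apply addmap_0.
Qed.

Lemma addmap_rsum {T} (g : T -> R) (l : list T) :
  (forall x, In x l -> D (g x)) -> f (rsum (map g l)) = rsum (map (fun x => f (g x)) l).
Proof.
  induction l as [|x l IH]; intro Hl; cbn [map]. - apply addmap_0.
  - rewrite !rsum_cons, f_add.
    + f_equal. apply IH. intros; apply Hl; right; auto.
    + apply Hl; left; auto.
    + apply subgroup_rsum; auto. intros y Hy. apply in_map_iff in Hy.
      destruct Hy as [z [<- Hz]]. apply Hl; right; auto.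
Qed.

End AdditiveMaps.

Section RingHoms.
Context {R S : nuring} (f : R -> S) (Hf : ringhom f).

Lemma ringhom_0 : f rzero = rzero.
Proof.
  apply (radd_cancel_l (f rzero)). rewrite <- (proj1 (Hf _ _)), !radd0. reflexivity.
Qed.

Lemma ringhom_opp x : f (ropp x) = ropp (f x).
Proof. apply radd_eq0_opp. rewrite <- (proj1 (Hf _ _)), raddN. apply ringhom_0. Qed.

Lemma ringhom_rsum (l : list R) : f (rsum l) = rsum (map f l).
Proof.
  induction l as [|x l IH]; cbn [map]. - apply ringhom_0.
  - rewrite !rsum_cons, (proj1 (Hf _ _)). f_equal. exact IH.
Qed.

End RingHoms.

Section Generation.
Context {R : nuring}.

Lemma addgen_subgroup (S : R -> Prop) : is_addsubgroup (addgen S).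
Proof. split; [apply ag_0 | split; [apply ag_add | apply ag_opp]]. Qed.

Lemma addgen_sub (S T : R -> Prop) :
  is_addsubgroup T -> (forall x, S x -> T x) -> forall x, addgen S x -> T x.
Proof. intros (H0 & Hadd & Hopp) HS x Hx. induction Hx; auto. Qed.

Lemma prodset_in (X Y : R -> Prop) x y : X x -> Y y -> prodset X Y (rmul x y).
Proof. intros. apply ag_in. exists x, y. auto. Qed.

Lemma prodset_list (X Y : R -> Prop) (z : R) :
  is_addsubgroup X -> prodset X Y z ->
  exists l : list (R * R), (forall t, In t l -> X (fst t) /\ Y (snd t)) /\
    z = rsum (map (fun t => rmul (fst t) (snd t)) l).
Proof.
  intros HX H. induction H as [z (x & y & Hx & Hy & ->)| |z z' _ [l1 [H1 ->]] _ [l2 [H2 ->]]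
                              |z _ [l [H1 ->]]].
  - exists [(x, y)]. split. + intros t [<-|[]]; auto. + cbn. rewrite radd0. reflexivity.
  - exists []. split. + intros t []. + reflexivity.
  - exists (l1 ++ l2). split.
    + intros t Ht. apply in_app_or in Ht. destruct Ht; auto.
    + rewrite map_app, rsum_app. reflexivity.
  - exists (map (fun t => (ropp (fst t), snd t)) l). split.
    + intros t Ht. apply in_map_iff in Ht. destruct Ht as [u [<- Hu]].
      destruct (H1 u Hu). split; auto. apply HX; auto.
    + rewrite map_map, <- rsum_map_opp. apply rsum_map_ext. intros. symmetry. apply ropp_mul_l.
Qed.

Lemma prodset_mul (X Y : R -> Prop) a b :
  (forall x y x', X x -> Y y -> X x' -> X (rmul (rmul x y) x')) ->
  prodset X Y a -> prodset X Y b -> prodset X Y (rmul a b).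
Proof.
  intros HXYX Ha Hb.
  assert (Hgen : forall x y, X x -> Y y -> prodset X Y (rmul (rmul x y) b)).
  { intros x y Hx Hy. clear Ha. induction Hb as [z (x' & y' & Hx' & Hy' & ->)| | |].
    - rewrite rmulA. apply prodset_in; auto.
    - rewrite rmulr0. apply ag_0.
    - rewrite rmulDr. apply ag_add; auto.
    - rewrite ropp_mul_r. apply ag_opp; auto. }
  induction Ha as [z (x & y & Hx & Hy & ->)| | |].
  - auto.
  - rewrite rmul0r. apply ag_0.
  - rewrite rmulDl. apply ag_add; auto.
  - rewrite ropp_mul_l. apply ag_opp; auto.
Qed.

(* If every m in M has a left unit in the ring L, then finitely many elements of
   M have a common one: given a unit e1 for ms and a unit e2 for m - e1 m, the
   element e1 + e2 - e2 e1 is a unit for m :: ms. *)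
Lemma common_left_unit (L M : R -> Prop) :
  is_addsubgroup L -> (forall a b, L a -> L b -> L (rmul a b)) ->
  is_addsubgroup M -> (forall a m, L a -> M m -> M (rmul a m)) ->
  (forall m, M m -> exists e, L e /\ rmul e m = m) ->
  forall ms, (forall m, In m ms -> M m) ->
  exists e, L e /\ forall m, In m ms -> rmul e m = m.
Proof.
  intros (L0 & Ladd & Lopp) Lmul (_ & Madd & Mopp) LM Hunit ms.
  induction ms as [|m ms IH]; intros Hms.
  - exists rzero. split; [exact L0 | intros m []].
  - destruct IH as [e1 [He1 E1]]. { intros; apply Hms; right; auto. }
    assert (Mm : M m) by (apply Hms; left; auto).
    destruct (Hunit (radd m (ropp (rmul e1 m)))) as [e2 [He2 E2]]; [auto|].
    exists (radd (radd e1 e2) (ropp (rmul e2 e1))). split; [auto|].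
    intros x [<-|Hx]; rewrite !rmulDl, ropp_mul_l, <- rmulA.
    + rewrite <- raddA, <- ropp_mul_r, <- rmulDr, E2, raddC, <- raddA, raddNr, radd0.
      reflexivity.
    + rewrite E1, <- raddA, raddN, radd0 by auto. reflexivity.
Qed.

End Generation.

Lemma common_right_unit {R : nuring} (L M : R -> Prop) :
  is_addsubgroup L -> (forall a b, L a -> L b -> L (rmul a b)) ->
  is_addsubgroup M -> (forall a m, L a -> M m -> M (rmul m a)) ->
  (forall m, M m -> exists e, L e /\ rmul m e = m) ->
  forall ms, (forall m, In m ms -> M m) ->
  exists e, L e /\ forall m, In m ms -> rmul m e = m.
Proof.
  intros HL Lmul HM LM Hunit.
  apply (@common_left_unit (opposite_ring R)); auto.
  intros a b Ha Hb. apply Lmul; auto.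
Qed.

Section Products.
Context {R : nuring}.

Lemma rprodne_cons (x : R) l : l <> [] -> rprodne (x :: l) = rmul x (rprodne l).
Proof. destruct l; [congruence | reflexivity]. Qed.

Lemma rprodne_cons_mul (x y : R) l : rprodne (rmul x y :: l) = rmul x (rprodne (y :: l)).
Proof. destruct l; [reflexivity | cbn [rprodne]; symmetry; apply rmulA]. Qed.

Lemma rprodne_app (l1 l2 : list R) : l1 <> [] -> l2 <> [] ->
  rprodne (l1 ++ l2) = rmul (rprodne l1) (rprodne l2).
Proof.
  intros H1 H2. induction l1 as [|x [|y l1] IH]; [congruence | apply rprodne_cons; auto |].
  rewrite <- app_comm_cons, !rprodne_cons, IH, rmulA by (try discriminate; auto).
  reflexivity.
Qed.

Lemma psiE_rev_mul (ps qs : list R) : length ps = length qs -> ps <> [] ->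
  psiE_rev rmul ps qs = rmul (rprodne ps) (rprodne (rev qs)).
Proof.
  revert qs. induction ps as [|p [|p' ps'] IH]; intros [|q [|q' qs']] Hl Hne;
    try discriminate; try congruence; [reflexivity|].
  change (rmul (rmul p (psiE_rev rmul (p' :: ps') (q' :: qs'))) q =
          rmul (rprodne (p :: p' :: ps')) (rprodne (rev (q' :: qs') ++ [q]))).
  assert (Hrev : rev (q' :: qs') <> []).
  { intro E. apply (f_equal (@length _)) in E. rewrite length_rev in E. discriminate. }
  rewrite IH by (cbn in *; try lia; discriminate).
  rewrite rprodne_app by (auto; discriminate).
  rewrite (rprodne_cons p) by discriminate.
  rewrite !rmulA. reflexivity.
Qed.

Lemma psiE_mul (ps xs : list R) : length ps = length xs -> ps <> [] ->
  psiE rmul ps xs = rmul (rprodne ps) (rprodne xs).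
Proof.
  intros Hl Hne. unfold psiE. rewrite psiE_rev_mul, rev_involutive; auto.
  rewrite length_rev; auto.
Qed.

Lemma pws_list (X : R -> Prop) (k : nat) x : is_addsubgroup X -> (1 <= k)%nat ->
  pws X k x ->
  exists L : list (list R), (forall l, In l L -> length l = k /\ Forall X l) /\
    x = rsum (map rprodne L).
Proof.
  intros HX. revert x. induction k as [|[|k] IH]; intros x Hk Hx; [lia| |].
  - exists [[x]]. split.
    + intros l [<-|[]]. split; auto. constructor; auto. eapply addgen_sub; eauto.
    + cbn. rewrite radd0. reflexivity.
  - change (prodset (pws X (S k)) X x) in Hx.
    induction Hx as [z (a & b & Ha & Hb & ->)| |z z' _ [L1 [H1 ->]] _ [L2 [H2 ->]]
                    |z _ [L [H1 ->]]].
    + destruct (IH a ltac:(lia) Ha) as [L [HL ->]].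
      exists (map (fun l => l ++ [b]) L). split.
      * intros l Hl. apply in_map_iff in Hl. destruct Hl as [l0 [<- Hl0]].
        destruct (HL l0 Hl0) as [Hlen F]. rewrite length_app, Hlen. cbn.
        split; [lia | apply Forall_app; auto].
      * rewrite rsum_mul_r, !map_map. apply rsum_map_ext. intros l Hl.
        destruct (HL l Hl) as [Hlen _].
        rewrite rprodne_app; [reflexivity| |discriminate].
        intros ->. discriminate.
    + exists []. split; [intros l []|reflexivity].
    + exists (L1 ++ L2). split.
      * intros l Hl. apply in_app_or in Hl. destruct Hl; auto.
      * rewrite map_app, rsum_app. reflexivity.
    + exists (map (fun l => match l with [] => [] | a :: l' => ropp a :: l' end) L). split.
      * intros l Hl. apply in_map_iff in Hl. destruct Hl as [[|a l0] [<- Hl0]];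
          destruct (H1 _ Hl0) as [E F]; [cbn in E; lia|].
        inversion F; subst. split; auto. constructor; auto. apply HX; auto.
      * rewrite map_map, <- rsum_map_opp. apply rsum_map_ext. intros [|a [|b l]] Hl;
          destruct (H1 _ Hl) as [E _]; [cbn in E; lia|reflexivity|].
        rewrite !rprodne_cons by discriminate. symmetry. apply ropp_mul_l.
Qed.

Lemma pws_ringgen (Gen X : R -> Prop) k x :
  (forall y, X y -> ringgen Gen y) -> pws X k x -> ringgen Gen x.
Proof.
  intro HX.
  assert (Hadd : forall T y, (forall z, T z -> ringgen Gen z) -> addgen T y -> ringgen Gen y).
  { intros T y HT Hy. induction Hy; auto using rg_0, rg_add, rg_opp. }
  revert x. induction k as [|[|k] IH]; intros x Hx; try solve [apply (Hadd X); auto].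
  apply (Hadd (fun a => exists x y, pws X (S k) x /\ X y /\ a = rmul x y)); [|exact Hx].
  intros z (a & b & Ha & Hb & ->). apply rg_mul; auto.
Qed.

End Products.

Section PreCP.
Context (A : nuring) (G : Z -> A -> Prop) (HP : pre_CP A G).

Lemma pre_CP_graded : is_graded A G.
Proof. apply HP. Qed.

Lemma pre_CP_semi_saturated : semi_saturated A G.
Proof. apply HP. Qed.

Lemma pre_CP_nearly_eps : nearly_eps_strong A G.
Proof. apply HP. Qed.

Lemma G_subgroup i : is_addsubgroup (G i).
Proof. apply pre_CP_graded. Qed.

Lemma G_0 i : G i rzero.
Proof. apply G_subgroup. Qed.

Lemma G_add i x y : G i x -> G i y -> G i (radd x y).
Proof. apply G_subgroup. Qed.

Lemma G_opp i x : G i x -> G i (ropp x).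
Proof. apply G_subgroup. Qed.

Lemma G_mul i j k x y : G i x -> G j y -> k = i + j -> G k (rmul x y).
Proof. intros Hx Hy ->. apply pre_CP_graded; auto. Qed.

Lemma G_rsum i l : (forall x, In x l -> G i x) -> G i (rsum l).
Proof. apply subgroup_rsum, G_subgroup. Qed.

Lemma prodset_G i j k z : prodset (G i) (G j) z -> k = i + j -> G k z.
Proof.
  intros Hz ->. revert z Hz. apply addgen_sub; [apply G_subgroup|].
  intros x (a & b & Ha & Hb & ->). eapply G_mul; eauto.
Qed.

Lemma prodset_G_mul i j a b : i + j + i = i ->
  prodset (G i) (G j) a -> prodset (G i) (G j) b -> prodset (G i) (G j) (rmul a b).
Proof.
  intros Hij. apply prodset_mul. intros x y x' Hx Hy Hx'.
  eapply G_mul; [eapply G_mul| |]; eauto; lia.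
Qed.

Lemma common_left_unit_G i xs : (forall x, In x xs -> G i x) ->
  exists e, prodset (G i) (G (- i)) e /\ forall x, In x xs -> rmul e x = x.
Proof.
  apply common_left_unit.
  - apply addgen_subgroup.
  - intros a b. apply prodset_G_mul. lia.
  - apply G_subgroup.
  - intros a m Ha Hm. eapply G_mul; [eapply prodset_G| |]; eauto; lia.
  - intros x Hx. destruct (pre_CP_nearly_eps i x Hx) as (a & b & Ha & _ & Ea & _). eauto.
Qed.

Lemma common_right_unit_G i xs : (forall x, In x xs -> G i x) ->
  exists e, prodset (G (- i)) (G i) e /\ forall x, In x xs -> rmul x e = x.
Proof.
  apply common_right_unit.
  - apply addgen_subgroup.
  - intros a b. apply prodset_G_mul. lia.
  - apply G_subgroup.
  - intros a m Ha Hm. eapply G_mul; [|eapply prodset_G|]; eauto; lia.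
  - intros x Hx. destruct (pre_CP_nearly_eps i x Hx) as (a & b & _ & Hb & _ & Eb). eauto.
Qed.

Lemma G_ringgen (S : A -> Prop) :
  (forall a, G 0 a -> S a) -> (forall a, G 1 a -> S a) -> (forall a, G (-1) a -> S a) ->
  forall a, ringgen S a.
Proof.
  intros H0 H1 Hm1.
  assert (Hhom : forall n a, G n a -> ringgen S a).
  { intros [|p|p] a Ha; [apply rg_in; auto| |].
    - rewrite <- (Znat.positive_nat_Z p) in Ha.
      apply (pre_CP_semi_saturated (Pos.to_nat p) ltac:(lia) a) in Ha.
      eapply pws_ringgen; [|exact Ha]. intros; apply rg_in; auto.
    - rewrite <- Pos2Z.opp_pos, <- (Znat.positive_nat_Z p) in Ha.
      apply (pre_CP_semi_saturated (Pos.to_nat p) ltac:(lia) a) in Ha.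
      eapply pws_ringgen; [|exact Ha]. intros; apply rg_in; auto. }
  intro a. destruct pre_CP_graded as (_ & _ & Hdec & _).
  destruct (Hdec a) as (l & _ & Hl & ->). clear Hdec.
  induction l as [|[n x] l IH]; [apply rg_0|]. cbn [map]. rewrite rsum_cons.
  apply rg_add; [apply (Hhom n), (Hl (n, x)); left; auto|].
  apply IH. intros; apply Hl; right; auto.
Qed.

End PreCP.

Section MaximalIdeal.
Context (A : nuring) (G : Z -> A -> Prop) (HP : pre_CP A G).

Notation Ann := (annA1 G).
Notation AnnPerp := (perp G (annA1 G)).
Notation Delta_rep := (Delta_repr (G (-1)) (G 1) rmul).

(* A_{-1} Ann(A_1) = 0, via a right local unit of p k in A_1 A_{-1} *)
Lemma Am1_kills_Ann p k : G (-1) p -> Ann k -> rmul p k = rzero.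
Proof.
  intros Hp [Hk Hk1].
  destruct (common_right_unit_G A G HP (-1) [rmul p k]) as [e [He Ee]].
  { intros x [<-|[]]. eapply G_mul; eauto. }
  rewrite <- (Ee (rmul p k)) by (left; auto). clear Ee.
  induction He as [z (q & p' & Hq & Hp' & ->)| |z z' _ IH1 _ IH2|z _ IH].
  - rewrite !rmulA, <- (rmulA _ p k q), Hk1, rmulr0, !rmul0r by auto. reflexivity.
  - apply rmulr0.
  - rewrite rmulDr, IH1, IH2. apply radd0.
  - rewrite ropp_mul_r, IH. apply ropp0.
Qed.

Lemma qp_in_AnnPerp q p : G 1 q -> G (-1) p -> AnnPerp (rmul q p).
Proof.
  intros Hq Hp. split; [eapply G_mul; eauto|]. intros k Hk. split.
  - rewrite <- rmulA, (Am1_kills_Ann p k), rmulr0; auto.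
  - destruct Hk as [_ Hk1]. rewrite rmulA, Hk1, rmul0r; auto.
Qed.

(* Ann(A_1)^perp is an ideal of A_0, because Ann(A_1) is one *)
Lemma AnnPerp_ideal : is_ideal_of (G 0) AnnPerp.
Proof.
  split; [intros x [Hx _]; exact Hx | split; [split; [|split] |]].
  - split; [apply G_0, HP|]. intros. rewrite rmul0r, rmulr0. auto.
  - intros x y [Hx Px] [Hy Py]. split; [apply (G_add A G HP); auto|]. intros k Hk.
    destruct (Px k Hk) as [E1 E2], (Py k Hk) as [E3 E4].
    rewrite rmulDl, rmulDr, E1, E2, E3, E4, radd0. auto.
  - intros x [Hx Px]. split; [apply (G_opp A G HP); auto|]. intros k Hk.
    destruct (Px k Hk) as [E1 E2]. rewrite ropp_mul_l, ropp_mul_r, E1, E2, ropp0. auto.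
  - intros r x Hr [Hx Px]. split; split; try (eapply (G_mul A G HP); eauto); intros k Hk.
    + assert (Hkr : Ann (rmul k r)).
      { destruct Hk as [Gk Hk1]. split; [eapply (G_mul A G HP); eauto|].
        intros y Hy. rewrite <- rmulA, Hk1; auto. eapply (G_mul A G HP); eauto. }
      rewrite <- rmulA, (proj1 (Px k Hk)), rmulr0, rmulA, (proj2 (Px _ Hkr)). auto.
    + assert (Hrk : Ann (rmul r k)).
      { destruct Hk as [Gk Hk1]. split; [eapply (G_mul A G HP); eauto|].
        intros y Hy. rewrite <- rmulA, Hk1, rmulr0; auto. }
      rewrite <- rmulA, (proj1 (Px _ Hrk)), rmulA, (proj2 (Px k Hk)), rmul0r. auto.
Qed.

Lemma thetaQ_mul (l : list (A * A)) (y : A) :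
  thetaQ rmul l y = rmul (rsum (map (fun t => rmul (fst t) (snd t)) l)) y.
Proof.
  unfold thetaQ. rewrite rsum_mul_r, map_map. apply rsum_map_ext. intros. apply rmulA.
Qed.

Definition Delta_in_F (x : A) : Prop := exists l, Delta_rep x l.

Lemma Delta_in_F_ideal :
  is_addsubgroup Delta_in_F /\
  forall r x, G 0 r -> Delta_in_F x -> Delta_in_F (rmul r x) /\ Delta_in_F (rmul x r).
Proof.
  split; [split; [|split] |].
  - exists []. split; [intros t []|]. intros q _. apply rmul0r.
  - intros x y [lx [Hlx Ex]] [ly [Hly Ey]]. exists (lx ++ ly). split.
    + intros t Ht. apply in_app_or in Ht. destruct Ht; auto.
    + intros q Hq. unfold thetaQ. rewrite map_app, rsum_app, rmulDl, Ex, Ey; auto.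
  - intros x [lx [Hlx Ex]]. exists (map (fun t => (ropp (fst t), snd t)) lx). split.
    + intros t Ht. apply in_map_iff in Ht. destruct Ht as [u [<- Hu]].
      destruct (Hlx u Hu). split; auto. apply (G_opp A G HP); auto.
    + intros q Hq. rewrite ropp_mul_l, Ex by auto. unfold thetaQ.
      rewrite map_map, <- rsum_map_opp. apply rsum_map_ext. intros. symmetry.
      apply ropp_mul_l.
  - intros r x Hr [lx [Hlx Ex]]. split.
    + exists (map (fun t => (rmul r (fst t), snd t)) lx). split.
      * intros t Ht. apply in_map_iff in Ht. destruct Ht as [u [<- Hu]].
        destruct (Hlx u Hu). split; auto. eapply (G_mul A G HP); eauto.
      * intros q Hq. rewrite <- rmulA, Ex by auto. unfold thetaQ.
        rewrite rsum_mul_l, !map_map. apply rsum_map_ext. intros. apply rmulA.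
    + exists (map (fun t => (fst t, rmul (snd t) r)) lx). split.
      * intros t Ht. apply in_map_iff in Ht. destruct Ht as [u [<- Hu]].
        destruct (Hlx u Hu). split; auto. eapply (G_mul A G HP); eauto.
      * intros q Hq. rewrite <- rmulA, Ex by (eapply (G_mul A G HP); eauto).
        unfold thetaQ. rewrite !map_map. apply rsum_map_ext. intros. cbn.
        rewrite (rmulA _ _ r q). reflexivity.
Qed.

Definition Jmax (x : A) : Prop := AnnPerp x /\ Delta_in_F x.

Lemma Jmax_good : good_ideal (G 0) (G (-1)) (G 1) rmul Jmax.
Proof.
  destruct AnnPerp_ideal as (HJ0 & (P0 & Padd & Popp) & Pmul).
  destruct Delta_in_F_ideal as ((D0 & Dadd & Dopp) & Dmul).
  split; [split; [|split; [split; [|split]|]] | split].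
  - intros x [Hx _]. auto.
  - split; auto.
  - intros x y [] []. split; auto.
  - intros x []. split; auto.
  - intros r x Hr [Px Dx]. destruct (Pmul r x Hr Px), (Dmul r x Hr Dx). split; split; auto.
  - intros x [_ Dx]. exact Dx.
  - (* faithfulness: an element of Ann(A_1) cap Ann(A_1)^perp is zero *)
    intros x [Px _] Hx. apply HP; [split; [apply Px | exact Hx] | exact Px].
Qed.

(* a faithful ideal I of A_0 lies in Ann(A_1)^perp: for k in Ann(A_1) and x in I,
   both k x and x k lie in I cap ker Delta *)
Lemma good_ideal_in_Jmax J : good_ideal (G 0) (G (-1)) (G 1) rmul J ->
  forall x, J x -> Jmax x.
Proof.
  intros [[HJ0 [_ HJmul]] [Hcompat Hfaith]] x Hx. split; [|apply Hcompat; auto].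
  split; [auto|]. intros k [Gk Hk1]. split.
  - apply Hfaith; [apply (HJmul k x Gk Hx)|]. intros q Hq.
    rewrite <- rmulA, Hk1, rmulr0; auto.
  - apply Hfaith; [apply (HJmul k x Gk Hx)|]. intros q Hq.
    rewrite <- rmulA, Hk1; auto. eapply (G_mul A G HP); eauto.
Qed.

Lemma Jmax_unique : unique_maximal_good_ideal (G 0) (G (-1)) (G 1) rmul Jmax.
Proof.
  split; [split; [apply Jmax_good | intros J' HJ' _; apply good_ideal_in_Jmax; auto]|].
  intros J' [HJ' Hmax] x. split; [apply good_ideal_in_Jmax; auto|].
  apply Hmax; [apply Jmax_good | apply good_ideal_in_Jmax; auto].
Qed.

Lemma qp_in_Jmax q p : G 1 q -> G (-1) p ->
  Jmax (rmul q p) /\ Delta_rep (rmul q p) [(q, p)].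
Proof.
  intros Hq Hp. assert (D : Delta_rep (rmul q p) [(q, p)]).
  { split; [intros t [<-|[]]; auto|]. intros y Hy. unfold thetaQ. cbn.
    rewrite radd0, rmulA. reflexivity. }
  split; [split; [apply qp_in_AnnPerp | exists [(q, p)]]|]; auto.
Qed.

End MaximalIdeal.

Section SystemAndInclusion.
Context (A : nuring) (G : Z -> A -> Prop) (HP : pre_CP A G).

Lemma part_system : is_system (G 0) (G (-1)) (G 1) rmul.
Proof.
  pose proof (G_subgroup A G HP) as Hsub.
  repeat split; intros; auto;
    first [ apply Hsub; auto | eapply G_mul; eauto; lia | apply rmulDl | apply rmulDr
          | apply rmulA | symmetry; apply rmulA ].
Qed.

Lemma part_sunital : s_unital_system (G 0) (G (-1)) (G 1).
Proof.
  split; [|split]; intros x Hx;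
    [ destruct (pre_CP_nearly_eps A G HP 0 x Hx) as (a & b & Ha & Hb & Ea & Eb)
    | destruct (pre_CP_nearly_eps A G HP (-1) x Hx) as (a & b & Ha & Hb & Ea & Eb)
    | destruct (pre_CP_nearly_eps A G HP 1 x Hx) as (a & b & Ha & Hb & Ea & Eb) ];
    exists a, b; repeat split; auto; eapply prodset_G; eauto.
Qed.

(* (FS): common local units e = sum q_k p_k give Theta = sum theta_{q_k,p_k} *)
Lemma part_FS : cond_FS (G (-1)) (G 1) rmul.
Proof.
  intros qs ps Hqs Hps. rewrite Forall_forall in Hqs, Hps.
  destruct (common_left_unit_G A G HP 1 qs Hqs) as [e1 [He1 E1]].
  destruct (common_right_unit_G A G HP (-1) ps Hps) as [e2 [He2 E2]].
  destruct (prodset_list _ _ _ (G_subgroup A G HP 1) He1) as [l1 [Hl1 ->]].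
  destruct (prodset_list _ _ _ (G_subgroup A G HP 1) He2) as [l2 [Hl2 ->]].
  exists l1, (map (fun t => (snd t, fst t)) l2). split; [|split; [|split]]; auto.
  - intros t Ht. apply in_map_iff in Ht. destruct Ht as [u [<- Hu]].
    destruct (Hl2 u Hu); auto.
  - intros q Hq. rewrite thetaQ_mul. auto.
  - intros p Hp. rewrite <- (E2 p Hp) at 2. unfold thetaP.
    rewrite rsum_mul_l, !map_map. apply rsum_map_ext. intros. symmetry. apply rmulA.
Qed.

Lemma part_covrep : is_covrep (G 0) (G (-1)) (G 1) rmul (incl_rep A).
Proof. repeat split. Qed.

Lemma part_surj : rep_surjective (G 0) (G (-1)) (G 1) (incl_rep A).
Proof. intro b. apply (G_ringgen A G HP); intros a Ha; exists a; cbn; auto. Qed.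

Lemma part_graded : rep_graded (G 0) (G (-1)) (G 1) (incl_rep A) G.
Proof.
  split; [apply part_surj|]. split; [apply (pre_CP_graded A G HP)|]. cbn. auto.
Qed.

Lemma rprodne_G (i : Z) (l : list A) : Forall (G i) l -> l <> [] ->
  G (i * Z.of_nat (length l)) (rprodne l).
Proof.
  intros F. induction F as [|x l Hx F IH]; intros Hne; [congruence|].
  destruct l as [|y l].
  - cbn. replace (i * 1) with i by lia. auto.
  - rewrite rprodne_cons by discriminate. eapply G_mul; eauto; [apply IH; discriminate|].
    cbn [length]. lia.
Qed.

Lemma prodset_in_Ik k b :
  prodset (G (- Z.of_nat k)) (G (Z.of_nat k)) b ->
  idealgen (G 0) (gensI (G 0) (G (-1)) (G 1) rmul (incl_rep A) k) b.
Proof.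
  induction 1 as [z (x & y & Hx & Hy & ->)| | |]; [|apply ig_0|apply ig_add; auto
                                                    |apply ig_opp; auto].
  destruct k as [|k].
  - apply ig_in. unfold gensI. left. split; [reflexivity|]. exists x, y. cbn in *. auto.
  - apply (pre_CP_semi_saturated A G HP (S k) ltac:(lia)) in Hx, Hy.
    destruct (pws_list _ (S k) _ (G_subgroup A G HP (-1)) ltac:(lia) Hx)
      as [L1 [H1 ->]].
    destruct (pws_list _ (S k) _ (G_subgroup A G HP 1) ltac:(lia) Hy) as [L2 [H2 ->]].
    rewrite rsum_mul_r, map_map. apply subgroup_rsum.
    { split; [apply ig_0 | split; [apply ig_add | apply ig_opp]]. }
    intros z Hz. apply in_map_iff in Hz. destruct Hz as [l1 [<- Hl1]].
    rewrite rsum_mul_l, map_map. apply subgroup_rsum.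
    { split; [apply ig_0 | split; [apply ig_add | apply ig_opp]]. }
    intros z Hz. apply in_map_iff in Hz. destruct Hz as [l2 [<- Hl2]].
    destruct (H1 l1 Hl1) as [E1 F1], (H2 l2 Hl2) as [E2 F2].
    apply ig_in. unfold gensI. right. split; [lia|]. exists l1, l2. repeat split; auto.
    cbn. rewrite psiE_mul; [reflexivity|congruence|].
    intros ->. discriminate.
Qed.

Lemma prodset_mul_G0 k r b : G 0 r ->
  prodset (G (- Z.of_nat k)) (G (Z.of_nat k)) b ->
  prodset (G (- Z.of_nat k)) (G (Z.of_nat k)) (rmul r b) /\
  prodset (G (- Z.of_nat k)) (G (Z.of_nat k)) (rmul b r).
Proof.
  intros Hr. induction 1 as [z (x & y & Hx & Hy & ->)| |z z' _ [IH1 IH1'] _ [IH2 IH2']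
                             |z _ [IH IH']].
  - rewrite rmulA, <- (rmulA _ x y r).
    split; apply prodset_in; auto; eapply (G_mul A G HP); eauto; lia.
  - rewrite rmulr0, rmul0r. split; apply ag_0.
  - rewrite rmulDr, rmulDl. split; apply ag_add; auto.
  - rewrite ropp_mul_r, ropp_mul_l. split; apply ag_opp; auto.
Qed.

Lemma Ik_in_prodset k b :
  idealgen (G 0) (gensI (G 0) (G (-1)) (G 1) rmul (incl_rep A) k) b ->
  prodset (G (- Z.of_nat k)) (G (Z.of_nat k)) b.
Proof.
  induction 1 as [z Hz| | | |r z Hr _ IH|r z Hr _ IH];
    [|apply ag_0|apply ag_add; auto|apply ag_opp; auto
     |apply (prodset_mul_G0 k r z Hr IH)|apply (prodset_mul_G0 k r z Hr IH)].
  destruct Hz as [(-> & r & r' & Hr & Hr' & ->) | (Hk & ps & xs & Hl1 & Hl2 & F1 & F2 & ->)].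
  - apply prodset_in; auto.
  - cbn. rewrite psiE_mul by (try lia; intros ->; cbn in *; lia).
    apply prodset_in.
    + replace (- Z.of_nat k) with (-1 * Z.of_nat (length ps)) by lia.
      apply rprodne_G; auto. intros ->. cbn in *; lia.
    + replace (Z.of_nat k) with (1 * Z.of_nat (length xs)) by lia.
      apply rprodne_G; auto. intros ->. cbn in *; lia.
Qed.

Lemma part_semifull : semi_full (G 0) (G (-1)) (G 1) rmul (incl_rep A) G.
Proof. intros k b. split; [apply prodset_in_Ik | apply Ik_in_prodset]. Qed.

End SystemAndInclusion.

Section GeneratedSubring.
Context {T : nuring} (Gen : T -> Prop).

Definition subring_car := {x : T | ringgen Gen x}.

Lemma subring_eq (u v : subring_car) : proj1_sig u = proj1_sig v -> u = v.
Proof.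
  destruct u as [u Hu], v as [v Hv]. cbn. intros ->. f_equal. apply proof_irrelevance.
Qed.

Definition subring_ring : nuring.
Proof.
  refine (NURing subring_car (exist _ rzero (rg_0 _))
    (fun u v => exist _ _ (rg_add _ _ _ (proj2_sig u) (proj2_sig v)))
    (fun u => exist _ _ (rg_opp _ _ (proj2_sig u)))
    (fun u v => exist _ _ (rg_mul _ _ _ (proj2_sig u) (proj2_sig v))) _ _ _ _ _ _ _);
    intros; apply subring_eq; cbn.
  - apply raddA. - apply raddC. - apply radd0r. - apply raddNr.
  - apply rmulA. - apply rmulDl. - apply rmulDr.
Defined.

End GeneratedSubring.

(* A Toeplitz ring is generated as a ring by the images of R, P and Q: the
   representation into the generated subring induces, by universality, a
   morphism whose composite with the inclusion must be the identity. *)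
Section ToeplitzGenerated.
Context {A : nuring} (R P Q : A -> Prop) (psi : A -> A -> A).
Context (HS : is_system R P Q psi) (t : rep A) (Ht : is_toeplitz R P Q psi t).

Definition toeplitz_gens (b : rB t) : Prop := exists a,
  (R a /\ b = rsig t a) \/ (P a /\ b = rS t a) \/ (Q a /\ b = rT t a).

Definition corestrict (D : A -> Prop) (F : A -> rB t)
  (HF : forall a, D a -> ringgen toeplitz_gens (F a)) (a : A) : subring_ring toeplitz_gens :=
  match excluded_middle_informative (D a) with
  | left Ha => exist _ (F a) (HF a Ha)
  | right _ => exist _ rzero (rg_0 _)
  end.

Lemma corestrict_val D F HF a : D a -> proj1_sig (corestrict D F HF a) = F a.
Proof. intro Ha. unfold corestrict. destruct excluded_middle_informative; tauto. Qed.

Definition subring_rep : rep A :=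
  Rep A (subring_ring toeplitz_gens)
    (corestrict P (rS t) (fun a Ha => rg_in _ _ (ex_intro _ a (or_intror (or_introl (conj Ha eq_refl))))))
    (corestrict Q (rT t) (fun a Ha => rg_in _ _ (ex_intro _ a (or_intror (or_intror (conj Ha eq_refl))))))
    (corestrict R (rsig t) (fun a Ha => rg_in _ _ (ex_intro _ a (or_introl (conj Ha eq_refl))))).

Lemma subring_rep_covrep : is_covrep R P Q psi subring_rep.
Proof.
  destruct HS as (((_ & Radd & _) & Rmul) & ((_ & Padd & _) & Pmul) & ((_ & Qadd & _) & Qmul)
                  & Hpsi & _).
  destruct Ht as [(C1 & C2 & C3 & C4 & C5 & C6) _].
  repeat split; intros; apply subring_eq; cbn; rewrite !corestrict_val; auto;
    try (apply C1; auto); try (apply C2; auto); try (apply C3; auto);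
    try (apply C4; auto); try (apply C5; auto); try apply C6; auto;
    try apply (Pmul _ _ ltac:(eassumption) ltac:(eassumption));
    try apply (Qmul _ _ ltac:(eassumption) ltac:(eassumption)).
Qed.

Lemma toeplitz_generated (x : rB t) : ringgen toeplitz_gens x.
Proof.
  destruct Ht as [Hcov Huniv].
  destruct (Huniv subring_rep subring_rep_covrep) as [[phi (Hhom & HS' & HT' & Hsig)] _].
  assert (Hincl : rep_morphism R P Q t t (fun x => proj1_sig (phi x))).
  { split; [|split; [|split]].
    - intros u v. destruct (Hhom u v) as [E1 E2]. rewrite E1, E2. split; reflexivity.
    - intros p Hp. rewrite HS'; auto. apply corestrict_val; auto.
    - intros q Hq. rewrite HT'; auto. apply corestrict_val; auto.
    - intros r Hr. rewrite Hsig; auto. apply corestrict_val; auto. }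
  assert (Hid : rep_morphism R P Q t t (fun x => x)).
  { split; [intros u v; split; reflexivity | auto]. }
  destruct (Huniv t Hcov) as [_ Hunique].
  rewrite <- (Hunique _ _ Hincl Hid x). apply proj2_sig.
Qed.

End ToeplitzGenerated.

Lemma rsum_indicator {R : nuring} (D : list Z) (k : Z) (x : R) : NoDup D -> In k D ->
  rsum (map (fun d => if Z.eqb k d then x else rzero) D) = x.
Proof.
  intros ND. induction ND as [|d D Hd ND IH]; intros Hk; [destruct Hk|].
  cbn [map]. rewrite rsum_cons. destruct (Z.eqb_spec k d) as [->|Hne].
  - rewrite rsum_map_zero; [apply radd0|]. intros d' Hd'.
    destruct (Z.eqb_spec d d'); [subst; contradiction | reflexivity].
  - destruct Hk as [->|Hk]; [congruence|]. rewrite IH; auto. apply radd0r.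
Qed.

Lemma rsum_group_by {R : nuring} {T} (deg : T -> Z) (F : T -> R) (cs : list T) (D : list Z) :
  NoDup D -> (forall c, In c cs -> In (deg c) D) ->
  rsum (map F cs) =
  rsum (map (fun d => rsum (map F (filter (fun c => Z.eqb (deg c) d) cs))) D).
Proof.
  intros ND. induction cs as [|c cs IH]; intros Hin.
  - symmetry. apply rsum_map_zero. reflexivity.
  - cbn [map]. rewrite rsum_cons, IH by (intros; apply Hin; right; auto).
    rewrite <- (rsum_indicator D (deg c) (F c) ND (Hin c (or_introl eq_refl))) at 1.
    rewrite <- rsum_map_add. apply rsum_map_ext. intros d _. cbn [filter].
    destruct (Z.eqb (deg c) d); cbn [map]; [reflexivity | apply radd0r].
Qed.

Section CuntzPimsnerIso.
Context (A : nuring) (G : Z -> A -> Prop) (HP : pre_CP A G).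
Context (t : rep A) (Ht : is_toeplitz (G 0) (G (-1)) (G 1) rmul t).
Context (O : nuring) (rho : rB t -> O) (Hrho : ringhom rho)
  (rho_onto : forall o : O, exists x, rho x = o)
  (rho_ker : forall x, rho x = rzero <-> TJ (G (-1)) (G 1) rmul (Jmax A G) t x).
Context (f : rB t -> A) (Hf : rep_morphism (G 0) (G (-1)) (G 1) t (incl_rep A) f).

(* the generators of O: sigma(r) and, in degree sgn b, W b x (T(x) or S(x)) *)
Definition sgn (b : bool) : Z := if b then 1 else -1.
Definition Sg (r : A) : O := rho (rsig t r).
Definition W (b : bool) (x : A) : O := rho (if b then rT t x else rS t x).

Lemma sgn_negb b : sgn (negb b) = - sgn b.
Proof. destruct b; reflexivity. Qed.

Lemma Sg_add r r' : G 0 r -> G 0 r' -> Sg (radd r r') = radd (Sg r) (Sg r').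
Proof. intros. unfold Sg. rewrite (proj1 (proj1 (proj1 Ht) r r' H H0)). apply Hrho. Qed.

Lemma Sg_mul r r' : G 0 r -> G 0 r' -> Sg (rmul r r') = rmul (Sg r) (Sg r').
Proof. intros. unfold Sg. rewrite (proj2 (proj1 (proj1 Ht) r r' H H0)). apply Hrho. Qed.

Lemma W_add b x y : G (sgn b) x -> G (sgn b) y -> W b (radd x y) = radd (W b x) (W b y).
Proof.
  destruct Ht as [(_ & C2 & C3 & _) _]. intros.
  unfold W. destruct b; [rewrite C3 | rewrite C2]; auto; apply Hrho.
Qed.

Lemma Sg_W r b x : G 0 r -> G (sgn b) x -> rmul (Sg r) (W b x) = W b (rmul r x).
Proof.
  destruct Ht as [(_ & _ & _ & C4 & C5 & _) _]. intros. unfold Sg, W.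
  rewrite <- (proj2 (Hrho _ _)). f_equal.
  destruct b; symmetry; [apply (C5 x r) | apply (C4 x r)]; auto.
Qed.

Lemma W_Sg b x r : G (sgn b) x -> G 0 r -> rmul (W b x) (Sg r) = W b (rmul x r).
Proof.
  destruct Ht as [(_ & _ & _ & C4 & C5 & _) _]. intros. unfold Sg, W.
  rewrite <- (proj2 (Hrho _ _)). f_equal.
  destruct b; symmetry; [apply (C5 x r) | apply (C4 x r)]; auto.
Qed.

(* S(p) T(q) = sigma(p q) by covariance, and T(q) S(p) = sigma(q p) holds in O
   because sigma(q p) - T(q) S(p) is a generator of T(J) *)
Lemma W_mul_negb b x y : G (sgn b) x -> G (sgn (negb b)) y ->
  rmul (W b x) (W (negb b) y) = Sg (rmul x y).
Proof.
  intros Hx Hy. unfold W, Sg. rewrite <- (proj2 (Hrho _ _)). destruct b; cbn in *.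
  - destruct (qp_in_Jmax A G HP x y Hx Hy) as [HJ HD].
    symmetry. apply rsub_eq0. rewrite <- (ringhom_opp _ Hrho), <- (proj1 (Hrho _ _)).
    apply rho_ker, ig_in. exists (rmul x y), [(x, y)].
    split; [exact HJ | split; [exact HD|]]. cbn. rewrite radd0. reflexivity.
  - f_equal. symmetry. apply (proj1 Ht); auto.
Qed.

Lemma Sg_0 : Sg rzero = rzero.
Proof. apply (addmap_0 Sg (G 0) (G_subgroup A G HP 0) Sg_add). Qed.

Lemma W_0 b : W b rzero = rzero.
Proof. apply (addmap_0 (W b) (G (sgn b)) (G_subgroup A G HP _) (W_add b)). Qed.

Lemma Sg_opp r : G 0 r -> Sg (ropp r) = ropp (Sg r).
Proof. apply (addmap_opp Sg (G 0) (G_subgroup A G HP 0) Sg_add). Qed.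

Lemma W_opp b x : G (sgn b) x -> W b (ropp x) = ropp (W b x).
Proof. apply (addmap_opp (W b) (G (sgn b)) (G_subgroup A G HP _) (W_add b)). Qed.

(* f vanishes on T(J): on a generator sigma(x) - sum T(q_k) S(p_k) its value
   x - sum q_k p_k lies in Ann(A_1) cap Ann(A_1)^perp = 0 *)
Lemma f_kills_TJ x : TJ (G (-1)) (G 1) rmul (Jmax A G) t x -> f x = rzero.
Proof.
  destruct Hf as (f_hom & f_S & f_T & f_sig).
  induction 1 as [z (x & l & [Px _] & [Hl HD] & ->)| |z z' _ IH1 _ IH2|z _ IH
                 |b z _ _ IH|b z _ _ IH].
  - rewrite (proj1 (f_hom _ _)), (ringhom_opp _ f_hom), (ringhom_rsum _ f_hom), map_map.
    rewrite f_sig by apply Px.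
    rewrite (rsum_map_ext _ (fun u => rmul (fst u) (snd u))).
    2:{ intros u Hu. destruct (Hl u Hu). rewrite (proj2 (f_hom _ _)), f_T, f_S; auto. }
    set (s := rsum (map (fun u => rmul (fst u) (snd u)) l)).
    destruct (AnnPerp_ideal A G HP) as (_ & Psub & _).
    assert (Ps : perp G (annA1 G) s).
    { apply subgroup_rsum; auto. intros z Hz. apply in_map_iff in Hz.
      destruct Hz as [u [<- Hu]]. destruct (Hl u Hu). apply qp_in_AnnPerp; auto. }
    assert (Pxs : perp G (annA1 G) (radd x (ropp s))) by (apply Psub; [exact Px | apply Psub, Ps]).
    apply HP; [split; [apply Pxs|] | exact Pxs].
    intros q Hq. rewrite rmulDl, ropp_mul_l, HD by auto. unfold s.
    rewrite <- thetaQ_mul. apply raddN.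
  - apply ringhom_0, f_hom.
  - rewrite (proj1 (f_hom _ _)), IH1, IH2. apply radd0.
  - rewrite (ringhom_opp _ f_hom), IH. apply ropp0.
  - rewrite (proj2 (f_hom _ _)), IH. apply rmulr0.
  - rewrite (proj2 (f_hom _ _)), IH. apply rmul0r.
Qed.

Definition g (o : O) : A := f (proj1_sig (constructive_indefinite_description _ (rho_onto o))).

Lemma g_rho x : g (rho x) = f x.
Proof.
  destruct Hf as (f_hom & _). unfold g.
  destruct (constructive_indefinite_description _ _) as [y Hy]. cbn.
  apply rsub_eq0. rewrite <- (ringhom_opp _ f_hom), <- (proj1 (f_hom _ _)).
  apply f_kills_TJ, rho_ker. rewrite (proj1 (Hrho _ _)), (ringhom_opp _ Hrho), Hy.
  apply raddN.
Qed.

Lemma g_hom : ringhom g.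
Proof.
  intros o o'. destruct (rho_onto o) as [x <-], (rho_onto o') as [y <-].
  rewrite <- (proj1 (Hrho _ _)), <- (proj2 (Hrho _ _)), !g_rho. apply Hf.
Qed.

Lemma g_Sg r : G 0 r -> g (Sg r) = r.
Proof. intro. unfold Sg. rewrite g_rho. apply Hf; auto. Qed.

Lemma g_W b x : G (sgn b) x -> g (W b x) = x.
Proof. intro. unfold W. rewrite g_rho. destruct b; apply Hf; auto. Qed.

(* Words in O: sigma(r), or W b x1 ... W b xn (n >= 1) with all x_i in A_{sgn b}. *)
Inductive word := wR (r : A) | wW (b : bool) (x : A) (xs : list A).

Definition img (c : word) : O :=
  match c with wR r => Sg r | wW b x xs => rprodne (map (W b) (x :: xs)) end.
Definition val (c : word) : A :=
  match c with wR r => r | wW _ x xs => rprodne (x :: xs) end.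
Definition wf (c : word) : Prop :=
  match c with wR r => G 0 r | wW b x xs => Forall (G (sgn b)) (x :: xs) end.
Definition deg (c : word) : Z :=
  match c with wR _ => 0 | wW b _ xs => sgn b * Z.of_nat (S (length xs)) end.

Lemma val_G c : wf c -> G (deg c) (val c).
Proof.
  destruct c as [r|b x xs]; cbn; [auto|]. intro F.
  apply (rprodne_G A G HP) in F; [exact F | discriminate].
Qed.

Lemma g_img c : wf c -> g (img c) = val c.
Proof.
  destruct c as [r|b x xs]; cbn [wf img val]; [apply g_Sg|].
  revert x. induction xs as [|x' xs IH]; intros x F; inversion F; subst.
  - apply g_W; auto.
  - change (g (rmul (W b x) (rprodne (map (W b) (x' :: xs)))) =
            rmul x (rprodne (x' :: xs))).
    rewrite (proj2 (g_hom _ _)), g_W, IH; auto.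
Qed.

Lemma Sg_img r b x xs : G 0 r -> G (sgn b) x ->
  rmul (Sg r) (img (wW b x xs)) = img (wW b (rmul r x) xs).
Proof.
  intros. destruct xs as [|x' xs]; cbn [img map rprodne]; [|rewrite rmulA]; rewrite Sg_W; auto.
Qed.

Definition is_word (o : O) : Prop := exists c, wf c /\ img c = o.

Lemma Sg_mul_word r c : G 0 r -> wf c -> is_word (rmul (Sg r) (img c)).
Proof.
  intros Hr Hc. destruct c as [r'|b x xs]; cbn in Hc.
  - exists (wR (rmul r r')). split; [cbn; eapply (G_mul A G HP); eauto|]. cbn.
    apply Sg_mul; auto.
  - inversion Hc; subst. exists (wW b (rmul r x) xs). split; [|symmetry; apply Sg_img; auto].
    constructor; auto. eapply (G_mul A G HP); eauto.
Qed.

Lemma W_mul_word b y c : G (sgn b) y -> wf c -> is_word (rmul (W b y) (img c)).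
Proof.
  intros Hy Hc. destruct c as [r|b' x xs]; cbn in Hc.
  - exists (wW b (rmul y r) []). split; [|cbn; symmetry; apply W_Sg; auto].
    constructor; [eapply (G_mul A G HP); eauto; lia | constructor].
  - inversion Hc as [|? ? Hx F]; subst.
    destruct (Bool.bool_dec b' b) as [->|Hb].
    + exists (wW b y (x :: xs)). split; [constructor; auto | reflexivity].
    + replace b' with (negb b) in * by (destruct b, b'; cbn; congruence).
      assert (Hyx : G 0 (rmul y x)).
      { rewrite sgn_negb in Hx. eapply (G_mul A G HP); eauto. lia. }
      destruct xs as [|x' xs].
      * exists (wR (rmul y x)). split; [exact Hyx|].
        cbn. symmetry. apply W_mul_negb; auto.
      * inversion F as [|? ? Hx' F']; subst.
        exists (wW (negb b) (rmul (rmul y x) x') xs). split.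
        -- constructor; auto. eapply (G_mul A G HP); eauto.
        -- rewrite <- Sg_img, <- (W_mul_negb b y x) by auto.
           change (img (wW (negb b) x (x' :: xs)))
             with (rmul (W (negb b) x) (img (wW (negb b) x' xs))).
           symmetry. apply rmulA.
Qed.

Lemma word_mul c1 c2 : wf c1 -> wf c2 -> is_word (rmul (img c1) (img c2)).
Proof.
  intros H1 H2. destruct c1 as [r|b x xs]; cbn in H1; [apply Sg_mul_word; auto|].
  revert x H1. induction xs as [|x' xs IH]; intros x F; inversion F; subst;
    [apply W_mul_word; auto|].
  change (is_word (rmul (rmul (W b x) (img (wW b x' xs))) (img c2))).
  rewrite <- rmulA. destruct (IH x' ltac:(auto)) as [c [Hc <-]]. apply W_mul_word; auto.
Qed.

Lemma word_opp c : wf c -> is_word (ropp (img c)).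
Proof.
  intro H. destruct c as [r|b x xs]; cbn in H.
  - exists (wR (ropp r)). split; [apply (G_opp A G HP); auto | apply Sg_opp; auto].
  - inversion H; subst. exists (wW b (ropp x) xs).
    split; [constructor; auto; apply (G_opp A G HP); auto|].
    destruct xs; cbn [img map rprodne]; rewrite W_opp; auto. apply ropp_mul_l.
Qed.

Definition word_sum (o : O) : Prop := exists cs, Forall wf cs /\ o = rsum (map img cs).

Lemma word_sum_word o : is_word o -> word_sum o.
Proof. intros [c [Hc <-]]. exists [c]. split; auto. cbn. rewrite radd0. reflexivity. Qed.

Lemma word_sum_add o o' : word_sum o -> word_sum o' -> word_sum (radd o o').
Proof.
  intros [cs [F ->]] [cs' [F' ->]]. exists (cs ++ cs').
  split; [apply Forall_app; auto | rewrite map_app, rsum_app; reflexivity].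
Qed.

Lemma word_sum_rsum l : Forall word_sum l -> word_sum (rsum l).
Proof.
  induction 1; [exists []; split; auto | apply word_sum_add; auto].
Qed.

Lemma word_sum_opp o : word_sum o -> word_sum (ropp o).
Proof.
  intros [cs [F ->]]. rewrite <- rsum_map_opp. apply word_sum_rsum, Forall_map.
  rewrite Forall_forall in *. intros c Hc. apply word_sum_word, word_opp; auto.
Qed.

Lemma word_sum_mul o o' : word_sum o -> word_sum o' -> word_sum (rmul o o').
Proof.
  intros [cs [F ->]] [cs' [F' ->]]. rewrite rsum_mul_r. apply word_sum_rsum.
  rewrite map_map. apply Forall_map. rewrite Forall_forall in *. intros c Hc.
  rewrite rsum_mul_l. apply word_sum_rsum. rewrite map_map. apply Forall_map.
  rewrite Forall_forall. intros c' Hc'. apply word_sum_word, word_mul; auto.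
Qed.

Lemma word_sum_all o : word_sum o.
Proof.
  destruct (rho_onto o) as [x <-].
  induction (toeplitz_generated _ _ _ _ (part_system A G HP) t Ht x)
    as [y (a & [[Ha ->]|[[Ha ->]|[Ha ->]]])| |y y' _ IH1 _ IH2|y _ IH|y y' _ IH1 _ IH2].
  - apply word_sum_word. exists (wR a). auto.
  - apply word_sum_word. exists (wW false a []). split; [constructor; auto | reflexivity].
  - apply word_sum_word. exists (wW true a []). split; [constructor; auto | reflexivity].
  - rewrite (ringhom_0 _ Hrho). exists []. split; auto.
  - rewrite (proj1 (Hrho _ _)). apply word_sum_add; auto.
  - rewrite (ringhom_opp _ Hrho). apply word_sum_opp; auto.
  - rewrite (proj2 (Hrho _ _)). apply word_sum_mul; auto.
Qed.

Lemma W_negb_img b v x x' xs : G (- sgn b) v -> G (sgn b) x -> G (sgn b) x' ->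
  rmul (W (negb b) v) (img (wW b x (x' :: xs))) = img (wW b (rmul (rmul v x) x') xs).
Proof.
  intros Hv Hx Hx'. rewrite <- sgn_negb in Hv.
  change (img (wW b x (x' :: xs))) with (rmul (W b x) (img (wW b x' xs))).
  rewrite <- Sg_img, rmulA.
  - rewrite <- (Bool.negb_involutive b) at 2. rewrite W_mul_negb; auto.
    rewrite Bool.negb_involutive. auto.
  - eapply (G_mul A G HP); eauto. rewrite sgn_negb. lia.
  - auto.
Qed.

(* an element X with X = sigma(e) X for some e = sum q_k p_k in A_{sgn b} A_{-sgn b}
   vanishes as soon as every W (negb b) p kills it, since sigma(q p) = W b q W (negb b) p *)
Lemma unit_kills b e X : prodset (G (sgn b)) (G (- sgn b)) e -> X = rmul (Sg e) X ->
  (forall v, G (- sgn b) v -> rmul (W (negb b) v) X = rzero) -> X = rzero.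
Proof.
  intros He Xunit Xkill. rewrite Xunit.
  destruct (prodset_list _ _ _ (G_subgroup A G HP _) He) as [l [Hl ->]].
  rewrite (addmap_rsum Sg (G 0) (G_subgroup A G HP 0) Sg_add).
  - rewrite rsum_mul_r, map_map. apply rsum_map_zero. intros [q p] Hqp.
    destruct (Hl _ Hqp) as [Hq Hp]. cbn [fst snd] in *.
    rewrite <- (W_mul_negb b q p), <- rmulA, Xkill, rmulr0; auto.
    rewrite sgn_negb. auto.
  - intros [q p] Hqp. destruct (Hl _ Hqp). eapply (G_mul A G HP); eauto. lia.
Qed.

(* Key step of injectivity: a sum of words W b x0 ... W b xn of fixed length n+1
   whose values in A add up to 0 is itself 0.  For n > 0, take a common left unit
   e = sum q_k p_k of the first letters; then X = sigma(e) X, and each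
   W (negb b) p_k X is a sum of shorter words with vanishing values. *)
Lemma words_vanish b n : forall cs,
  (forall c, In c cs -> exists x xs, c = wW b x xs /\ length xs = n /\
                                      Forall (G (sgn b)) (x :: xs)) ->
  rsum (map val cs) = rzero -> rsum (map img cs) = rzero.
Proof.
  induction n as [|n IH]; intros cs Hcs Hval.
  - rewrite (rsum_map_ext _ (fun c => W b (val c))).
    + rewrite <- (addmap_rsum (W b) (G (sgn b)) (G_subgroup A G HP _) (W_add b)), Hval.
      * apply W_0.
      * intros c Hc. destruct (Hcs c Hc) as (x & [|] & -> & Hl & F); [|discriminate].
        inversion F; auto.
    + intros c Hc. destruct (Hcs c Hc) as (x & [|] & -> & Hl & _); [reflexivity|discriminate].
  - set (head := fun c => match c with wW _ x _ => x | wR r => r end).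
    destruct (common_left_unit_G A G HP (sgn b) (map head cs)) as [e [He Ee]].
    { intros y Hy. apply in_map_iff in Hy. destruct Hy as [c [<- Hc]].
      destruct (Hcs c Hc) as (x & xs & -> & _ & F). inversion F; auto. }
    set (X := rsum (map img cs)).
    assert (Xunit : X = rmul (Sg e) X).
    { unfold X. rewrite rsum_mul_l, map_map. apply rsum_map_ext. intros c Hc.
      destruct (Hcs c Hc) as (x & xs & -> & _ & F). inversion F; subst.
      rewrite Sg_img, (Ee x); auto.
      - apply (in_map head _ (wW b x xs)). auto.
      - eapply prodset_G; eauto. lia. }
    assert (Xkill : forall v, G (- sgn b) v -> rmul (W (negb b) v) X = rzero).
    { intros v Hv.
      set (shift := fun c => match c with
                             | wW b' x (x' :: xs) => wW b' (rmul (rmul v x) x') xs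
                             | _ => c end).
      unfold X. rewrite rsum_mul_l, map_map, (rsum_map_ext _ (fun c => img (shift c))).
      2:{ intros c Hc. destruct (Hcs c Hc) as (x & [|x' xs] & -> & Hl & F); [discriminate|].
          inversion F as [|? ? Hx F']; inversion F'; subst. apply W_negb_img; auto. }
      rewrite <- (map_map shift img). apply IH.
      - intros c Hc. apply in_map_iff in Hc. destruct Hc as [c0 [<- Hc0]].
        destruct (Hcs c0 Hc0) as (x & [|x' xs] & -> & Hl & F); [discriminate|].
        inversion F as [|? ? Hx F']; inversion F'; subst.
        exists (rmul (rmul v x) x'), xs. repeat split; [cbn in Hl; lia|].
        constructor; auto. eapply (G_mul A G HP); [eapply (G_mul A G HP)| |]; eauto; lia.
      - rewrite map_map, (rsum_map_ext _ (fun c => rmul v (val c))).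
        + rewrite <- (map_map val (rmul v)), <- rsum_mul_l, Hval. apply rmulr0.
        + intros c Hc. destruct (Hcs c Hc) as (x & [|x' xs] & -> & Hl & F); [discriminate|].
          cbn [shift val]. rewrite rprodne_cons_mul, (rprodne_cons x) by discriminate.
          symmetry. apply rmulA. }
    apply (unit_kills b e); auto.
Qed.

Lemma deg_wW b x xs d : deg (wW b x xs) = d ->
  b = (0 <? d) /\ length xs = (Z.to_nat (Z.abs d) - 1)%nat.
Proof.
  cbn. intros <-. destruct b; cbn [sgn].
  - split; [symmetry; apply Z.ltb_lt; lia | lia].
  - split; [symmetry; apply Z.ltb_ge; lia | lia].
Qed.

Lemma words_vanish_deg d cs : Forall wf cs -> (forall c, In c cs -> deg c = d) ->
  rsum (map val cs) = rzero -> rsum (map img cs) = rzero.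
Proof.
  intros F Hd Hval. rewrite Forall_forall in F.
  destruct (Z.eq_dec d 0) as [->|Hd0].
  - rewrite (rsum_map_ext _ (fun c => Sg (val c))).
    + rewrite <- (addmap_rsum Sg (G 0) (G_subgroup A G HP 0) Sg_add), Hval; [apply Sg_0|].
      intros c Hc. specialize (F c Hc). specialize (Hd c Hc). destruct c; [exact F|].
      cbn in Hd. destruct b; cbn in Hd; lia.
    + intros c Hc. specialize (Hd c Hc). destruct c; [reflexivity|].
      cbn in Hd. destruct b; cbn in Hd; lia.
  - apply (words_vanish (0 <? d) (Z.to_nat (Z.abs d) - 1)); auto.
    intros c Hc. specialize (F c Hc). specialize (Hd c Hc). destruct c as [r|b x xs].
    + cbn in Hd. congruence.
    + destruct (deg_wW b x xs d Hd) as [-> Hl]. exists x, xs. auto.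
Qed.

(* g is injective: split a sum of words by degree; by directness of the grading
   the values of each degree part add up to 0 *)
Lemma g_inj0 o : g o = rzero -> o = rzero.
Proof.
  intro Hg. destruct (word_sum_all o) as [cs [F ->]].
  rewrite (ringhom_rsum _ g_hom), map_map in Hg. rewrite Forall_forall in F.
  rewrite (rsum_map_ext _ val) in Hg by (intros; apply g_img; auto).
  set (D := nodup Z.eq_dec (map deg cs)).
  assert (ND : NoDup D) by apply NoDup_nodup.
  assert (HD : forall c, In c cs -> In (deg c) D) by (intros; apply nodup_In, in_map; auto).
  rewrite (rsum_group_by deg img cs D ND HD).
  rewrite (rsum_group_by deg val cs D ND HD) in Hg.
  set (part := fun d => filter (fun c => Z.eqb (deg c) d) cs) in *.
  assert (Hpart : forall d c, In c (part d) -> In c cs /\ deg c = d).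
  { intros d c Hc. apply filter_In in Hc. destruct Hc as [Hc E]. apply Z.eqb_eq in E. auto. }
  destruct (pre_CP_graded A G HP) as (_ & _ & _ & Hdirect).
  apply rsum_map_zero. intros d Hd. apply (words_vanish_deg d).
  - apply Forall_forall. intros c Hc. apply F, (Hpart d c Hc).
  - intros c Hc. apply (Hpart d c Hc).
  - refine (Hdirect (map (fun d => (d, rsum (map val (part d)))) D) _ _ _ (d, _) _).
    + rewrite map_map. cbn. rewrite map_id. exact ND.
    + intros p Hp. apply in_map_iff in Hp. destruct Hp as [d' [<- _]]. cbn.
      apply (G_rsum A G HP). intros y Hy. apply in_map_iff in Hy.
      destruct Hy as [c [<- Hc]]. destruct (Hpart d' c Hc) as [Hc' <-]. apply val_G; auto.
    + rewrite map_map. exact Hg.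
    + apply in_map_iff. exists d. auto.
Qed.

Lemma g_inj o o' : g o = g o' -> o = o'.
Proof.
  intro E. apply rsub_eq0, g_inj0.
  rewrite (proj1 (g_hom _ _)), (ringhom_opp _ g_hom), E. apply raddN.
Qed.

(* g is onto: its image is a subring containing A_0, A_1 and A_{-1} *)
Lemma g_onto a : exists o, g o = a.
Proof.
  assert (Himg : forall y, ringgen (fun z => exists o, g o = z) y -> exists o, g o = y).
  { induction 1 as [y Hy| |y y' _ [o <-] _ [o' <-]|y _ [o <-]|y y' _ [o <-] _ [o' <-]].
    - exact Hy.
    - exists rzero. apply ringhom_0, g_hom.
    - exists (radd o o'). apply g_hom.
    - exists (ropp o). apply ringhom_opp, g_hom.
    - exists (rmul o o'). apply g_hom. }
  apply Himg, (G_ringgen A G HP); intros x Hx.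
  - exists (Sg x). apply g_Sg; auto.
  - exists (W true x). apply g_W; auto.
  - exists (W false x). apply g_W; auto.
Qed.

Definition h (a : A) : O := proj1_sig (constructive_indefinite_description _ (g_onto a)).

Lemma g_h a : g (h a) = a.
Proof. unfold h. destruct constructive_indefinite_description. auto. Qed.

Lemma h_g o : h (g o) = o.
Proof. apply g_inj, g_h. Qed.

Lemma h_hom : ringhom h.
Proof.
  intros a a'. split; apply g_inj; rewrite g_h;
    [rewrite (proj1 (g_hom _ _)) | rewrite (proj2 (g_hom _ _))]; rewrite !g_h; reflexivity.
Qed.

Lemma f_rprodne (k : A -> rB t) (D : A -> Prop) (l : list A) :
  (forall x, D x -> f (k x) = x) -> Forall D l -> f (rprodne (map k l)) = rprodne l.
Proof.
  destruct Hf as (f_hom & _). intros Hk F.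
  induction F as [|x l Hx F IH]; [apply ringhom_0, f_hom|].
  destruct l as [|y l]; [apply Hk; auto|].
  change (f (rmul (k x) (rprodne (map k (y :: l)))) = rmul x (rprodne (y :: l))).
  rewrite (proj2 (f_hom _ _)), Hk, IH; auto.
Qed.

Lemma f_toep_grading i x : toep_grading (G 0) (G (-1)) (G 1) t i x -> G i (f x).
Proof.
  destruct Hf as (f_hom & f_S & f_T & f_sig).
  induction 1 as [z (m & n & u & v & Ei & Hu & Hv & Hz)| |z z' _ IH1 _ IH2|z _ IH].
  - assert (Gu : G (Z.of_nat m) (f u)).
    { destruct Hu as [(-> & r & Hr & ->)|(Hm & xs & Hl & F & ->)]; [rewrite f_sig; auto|].
      rewrite (f_rprodne _ (G 1)); auto. replace (Z.of_nat m) with (1 * Z.of_nat (length xs)) by lia.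
      apply (rprodne_G A G HP); auto. intros ->. cbn in Hl. lia. }
    assert (Gv : G (- Z.of_nat n) (f v)).
    { destruct Hv as [(-> & r & Hr & ->)|(Hn & ps & Hl & F & ->)]; [rewrite f_sig; auto|].
      rewrite (f_rprodne _ (G (-1))); auto.
      replace (- Z.of_nat n) with (-1 * Z.of_nat (length ps)) by lia.
      apply (rprodne_G A G HP); auto. intros ->. cbn in Hl. lia. }
    destruct Hz as [->|(r & Hr & ->)]; rewrite !(proj2 (f_hom _ _)).
    + eapply (G_mul A G HP); eauto.
    + rewrite f_sig by auto. eapply (G_mul A G HP); [| eapply (G_mul A G HP) |]; eauto; lia.
  - rewrite (ringhom_0 _ f_hom). apply (G_0 A G HP).
  - rewrite (proj1 (f_hom _ _)). apply (G_add A G HP); auto.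
  - rewrite (ringhom_opp _ f_hom). apply (G_opp A G HP); auto.
Qed.

(* conversely every element of A_i is f of an element of the i-th component:
   write a = c a = a b with local units b, c in A_0 and a as a sum of products
   of elements of A_{+-1} *)
Lemma G_in_f_toep_grading i a : G i a ->
  exists x, toep_grading (G 0) (G (-1)) (G 1) t i x /\ f x = a.
Proof.
  destruct Hf as (f_hom & f_S & f_T & f_sig). intro Ha.
  destruct (pre_CP_nearly_eps A G HP i a Ha) as (c & b & Hc & Hb & Ec & Eb).
  assert (Gc : G 0 c) by (eapply prodset_G; eauto; lia).
  assert (Gb : G 0 b) by (eapply prodset_G; eauto; lia).
  destruct i as [|p|p].
  - exists (rmul (rsig t c) (rsig t a)). split.
    + apply ag_in. exists 0%nat, 0%nat, (rsig t c), (rsig t a).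
      repeat split; [left; eauto | left; eauto | left; reflexivity].
    + rewrite (proj2 (f_hom _ _)), !f_sig; auto.
  - set (k := Pos.to_nat p). replace (Z.pos p) with (Z.of_nat k) in * by lia.
    apply (pre_CP_semi_saturated A G HP k ltac:(lia)) in Ha.
    destruct (pws_list _ k _ (G_subgroup A G HP 1) ltac:(lia) Ha) as [L [HL HaL]].
    exists (rsum (map (fun l => rmul (rprodne (map (rT t) l)) (rsig t b)) L)). split.
    + apply subgroup_rsum; [apply addgen_subgroup|]. intros y Hy.
      apply in_map_iff in Hy. destruct Hy as [l [<- Hl]]. destruct (HL l Hl) as [Hlen F].
      apply ag_in. exists k, 0%nat, (rprodne (map (rT t) l)), (rsig t b).
      repeat split; [lia | right; split; [lia | eauto] | left; eauto | left; reflexivity].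
    + rewrite (ringhom_rsum _ f_hom), map_map, <- Eb, HaL, rsum_mul_r, map_map.
      apply rsum_map_ext. intros l Hl. destruct (HL l Hl) as [_ F].
      rewrite (proj2 (f_hom _ _)), f_sig, (f_rprodne _ (G 1)); auto.
  - set (k := Pos.to_nat p). replace (Z.neg p) with (- Z.of_nat k) in * by lia.
    apply (pre_CP_semi_saturated A G HP k ltac:(lia)) in Ha.
    destruct (pws_list _ k _ (G_subgroup A G HP (-1)) ltac:(lia) Ha) as [L [HL HaL]].
    exists (rsum (map (fun l => rmul (rsig t c) (rprodne (map (rS t) l))) L)). split.
    + apply subgroup_rsum; [apply addgen_subgroup|]. intros y Hy.
      apply in_map_iff in Hy. destruct Hy as [l [<- Hl]]. destruct (HL l Hl) as [Hlen F].
      apply ag_in. exists 0%nat, k, (rsig t c), (rprodne (map (rS t) l)).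
      repeat split; [left; eauto | right; split; [lia | eauto] | left; reflexivity].
    + rewrite (ringhom_rsum _ f_hom), map_map, <- Ec, HaL, rsum_mul_l, map_map.
      apply rsum_map_ext. intros l Hl. destruct (HL l Hl) as [_ F].
      rewrite (proj2 (f_hom _ _)), f_sig, (f_rprodne _ (G (-1))); auto.
Qed.

Lemma quotient_iso :
  rep_iso (G 0) (G (-1)) (G 1) (incl_rep A) (quot_rep t O rho) /\
  graded_iso A O G (fun i o => exists x, toep_grading (G 0) (G (-1)) (G 1) t i x /\ o = rho x).
Proof.
  assert (h_gen : forall (D : A -> Prop) (k : A -> O),
             (forall a, D a -> g (k a) = a) -> forall a, D a -> h a = k a).
  { intros D k Hk a Ha. transitivity (h (g (k a))); [rewrite Hk; auto | apply h_g]. }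
  split.
  - exists h, g. split; [|split; [|split]]; [| |apply g_h|apply h_g].
    + split; [apply h_hom|]. cbn.
      split; [|split]; intros a Ha;
        [apply (h_gen _ (W false) (g_W false)) | apply (h_gen _ (W true) (g_W true))
        | apply (h_gen _ Sg g_Sg)]; auto.
    + split; [apply g_hom|]. cbn.
      split; [|split]; intros a Ha; [apply (g_W false)|apply (g_W true)|apply g_Sg]; auto.
  - exists h, g. split; [apply h_hom|]. split; [apply g_hom|].
    split; [apply g_h|]. split; [apply h_g|]. intros i a. split.
    + intro Ha. destruct (G_in_f_toep_grading i a Ha) as [x [Hx Ex]].
      exists x. split; auto. apply g_inj. rewrite g_h, g_rho; auto.
    + intros [x [Hx Ex]]. rewrite <- (g_h a), Ex, g_rho. apply f_toep_grading; auto.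
Qed.

End CuntzPimsnerIso.

Theorem mainTheorem14 (A : nuring) (G : Z -> A -> Prop) :
  pre_CP A G ->
  (* (A_{-1}, A_1, psi) with psi(a (x) b) = ab is an s-unital A_0-system with (FS) *)
  is_system (G 0) (G (-1)) (G 1) rmul /\
  s_unital_system (G 0) (G (-1)) (G 1) /\
  cond_FS (G (-1)) (G 1) rmul /\
  (* the inclusion tuple is a surjective (graded) covariant representation *)
  is_covrep (G 0) (G (-1)) (G 1) rmul (incl_rep A) /\
  rep_surjective (G 0) (G (-1)) (G 1) (incl_rep A) /\
  rep_graded (G 0) (G (-1)) (G 1) (incl_rep A) G /\
  (* it is semi-full *)
  semi_full (G 0) (G (-1)) (G 1) rmul (incl_rep A) G /\
  (* the Cuntz-Pimsner ring is well-defined: a unique maximal psi-compatible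
     faithful ideal J exists, and for O = T / T(J) (any Toeplitz representation T,
     any surjective ring map rho : T -> B' with kernel T(J)) *)
  exists J : A -> Prop,
    unique_maximal_good_ideal (G 0) (G (-1)) (G 1) rmul J /\
    forall (t : rep A), is_toeplitz (G 0) (G (-1)) (G 1) rmul t ->
    forall (B' : nuring) (rho : rB t -> B'),
      ringhom rho -> (forall b : B', exists x, rho x = b) ->
      (forall x, rho x = rzero <-> TJ (G (-1)) (G 1) rmul J t x) ->
      rep_iso (G 0) (G (-1)) (G 1) (incl_rep A) (quot_rep t B' rho) /\
      graded_iso A B' G
        (fun i o => exists x, toep_grading (G 0) (G (-1)) (G 1) t i x /\ o = rho x).
Proof.
  intro HP.
  split; [apply part_system; auto|].
  split; [apply part_sunital; auto|].
  split; [apply part_FS; auto|].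
  split; [apply part_covrep|].
  split; [apply part_surj; auto|].
  split; [apply part_graded; auto|].
  split; [apply part_semifull; auto|].
  exists (Jmax A G). split; [apply Jmax_unique; auto|].
  intros t Ht B' rho Hrho Honto Hker.
  (* the inclusion representation is covariant, so universality gives f : T -> A *)
  destruct (proj2 Ht (incl_rep A) (part_covrep A G)) as [[f Hf] _].
  eapply quotient_iso; eauto.
Qed.
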